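(* Let $J\subset\mathbb{R}$ be a compact interval, $c$ an endpoint of $J$, and let $f=\sum_{k\ge k_0}c_kg_k\in C^\infty(J)$ be a series satisfying conditions (i)–(iii) below (so $f$ is pliable at $c$). Then: (a) the partial sums $\sum_{k=k_0}^l c_kg_k$ converge to $f$ in the $C^r$ norm for each $r\in\mathbb{Z}_{\ge0}$; (b) for each $r\in\mathbb{Z}_{\ge0}$, $f^{(r)}(c)=0$ and $f^{(r)}=\sum_{k\ge k_0}c_kg_k^{(r)}$ is a series satisfying (i)–(iii), so $f^{(r)}$ is pliable at $c$; (c) $hf+g$ is pliable at $c$ for every $h,g\in C^\infty(J)$ with $\mathrm{supp}\,g\subset J\setminus\{c\}$; (d) $f\circ\iota$ is pliable at $\iota^{-1}(c)$ for each isometry $\iota$ of $\mathbb{R}$; (e) if $d\colon K\to J$ is a diffeomorphism from a compact interval $K$, then $f\circ d$ is pliable at $d^{-1}(c)$.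
   Context: A sequence $(a_k)$ grows at most exponentially if $(2^{k\gamma}a_k)$ is bounded for some $\gamma\in\mathbb{R}$; $(a_k)$ converges super-exponentially to $a$ if $2^{k\gamma}(a_k-a)\to0$ for every $\gamma\in\mathbb{R}$. The $C^r$ norm is $\|u\|_r=\sum_{i=0}^r\max|u^{(i)}|$. Given $k_0\in\mathbb{Z}$ and an endpoint $c$ of a compact interval $J$, $f\in C^\infty(J)$ is pliable at $c$ if $f=\sum_{k\ge k_0}c_kg_k$ where (i) $(c_k)$ is a sequence of positive reals converging super-exponentially to $0$; (ii) $g_k\in C^\infty(J)$, $\{\mathrm{supp}\,g_k\}_{k\ge k_0}$ is a locally finite family of compact subsets of $J\setminus\{c\}$, and for every $r$ the sequence of $C^r$ norms of $g_k$ grows at most exponentially; (iii) there is $L>0$ such that whenever $0<2\varepsilon<$ length of $J$ and $J_\varepsilon$ is the set of indices $k$ for which $\mathrm{supp}\,g_k$ meets $\{x\in J:\varepsilon\le|x-c|\le2\varepsilon\}$, then $J_\varepsilon$ has at most $L$ elements and $2^{-kL}\le\varepsilon$ for every $k\in J_\varepsilon$. *)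

From Stdlib Require Import Reals Lra ZArith List ClassicalEpsilon.
From Coquelicot Require Import Coquelicot.
Open Scope R_scope.

Definition Icc (a b x : R) : Prop := a <= x <= b.

(* one-sided / within-J derivative: difference quotient limit along J \ {x} *)
Definition is_derive_within (a b : R) (f : R -> R) (x l : R) : Prop :=
  filterlim (fun y => (f y - f x) / (y - x))
    (within (fun y => Icc a b y /\ y <> x) (locally x)) (locally l).

(* the derivative within J (chosen by description; unique when a < b) *)
Definition Dw (a b : R) (f : R -> R) (x : R) : R :=
  epsilon (inhabits 0) (fun l => is_derive_within a b f x l).

Fixpoint deriv_n (a b : R) (f : R -> R) (n : nat) : R -> R :=
  match n with
  | O => f
  | S m => fun x => Dw a b (deriv_n a b f m) x
  end.

Definition smooth (a b : R) (f : R -> R) : Prop :=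
  forall (n : nat) (x : R), Icc a b x ->
    exists l, is_derive_within a b (deriv_n a b f n) x l.

(* C^r norm: sum_{i=0}^r max_J |u^(i)| (max realised as a supremum) *)
Definition Cnorm (a b : R) (r : nat) (u : R -> R) : R :=
  sum_n (fun i => real (Lub_Rbar (fun y => exists x, Icc a b x /\
                                      y = Rabs (deriv_n a b u i x)))) r.

(* support of g in J: closure of {x in J | g x <> 0} *)
Definition supp (a b : R) (g : R -> R) (x : R) : Prop :=
  Icc a b x /\ forall eps, 0 < eps ->
    exists y, Icc a b y /\ Rabs (y - x) < eps /\ g y <> 0.

Definition pow2 (t : R) : R := Rpower 2 t.

Definition at_most_exp (k0 : Z) (s : Z -> R) : Prop :=
  exists gamma M : R, forall k : Z, (k0 <= k)%Z ->
    Rabs (pow2 (IZR k * gamma) * s k) <= M.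

Definition super_exp_zero (k0 : Z) (s : Z -> R) : Prop :=
  forall gamma : R,
    is_lim_seq (fun n : nat => pow2 (IZR (k0 + Z.of_nat n) * gamma) *
                               s (k0 + Z.of_nat n)%Z) 0.

Definition Jeps (a b c : R) (k0 : Z) (g : Z -> R -> R) (eps : R) (k : Z) : Prop :=
  (k0 <= k)%Z /\ exists x, supp a b (g k) x /\ eps <= Rabs (x - c) <= 2 * eps.

Definition pliable_series (a b c : R) (k0 : Z) (cs : Z -> R) (gs : Z -> R -> R)
  : Prop :=
  (forall k, (k0 <= k)%Z -> 0 < cs k) /\
  super_exp_zero k0 cs /\
  (forall k, (k0 <= k)%Z -> smooth a b (gs k) /\ ~ supp a b (gs k) c) /\
  (forall x, Icc a b x -> x <> c ->
     exists delta, 0 < delta /\ exists N : Z, forall k, (k0 <= k)%Z -> (N <= k)%Z ->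
       forall y, supp a b (gs k) y -> delta <= Rabs (y - x)) /\
  (forall r : nat, at_most_exp k0 (fun k => Cnorm a b r (gs k))) /\
  (exists L, 0 < L /\ forall eps, 0 < 2 * eps < b - a ->
     (forall l : list Z, NoDup l -> (forall k, In k l -> Jeps a b c k0 gs eps k) ->
        INR (length l) <= L) /\
     (forall k, Jeps a b c k0 gs eps k -> pow2 (- (IZR k) * L) <= eps)).

Definition partial_sum (k0 : Z) (cs : Z -> R) (gs : Z -> R -> R) (m : nat) (x : R) : R :=
  sum_n (fun n => cs (k0 + Z.of_nat n)%Z * gs (k0 + Z.of_nat n)%Z x) m.

Definition sums_to (a b : R) (k0 : Z) (cs : Z -> R) (gs : Z -> R -> R) (f : R -> R)
  : Prop :=
  forall x, Icc a b x -> is_lim_seq (fun m => partial_sum k0 cs gs m x) (f x).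

Definition pliable (a b c : R) (f : R -> R) : Prop :=
  (c = a \/ c = b) /\ smooth a b f /\
  exists (k0 : Z) (cs : Z -> R) (gs : Z -> R -> R),
    pliable_series a b c k0 cs gs /\ sums_to a b k0 cs gs f.

(* (a) A sequence decaying super-exponentially beats one growing at most
   exponentially, so [c_k |g_k|_r <= A 2^-k]: every termwise differentiated series converges
   uniformly at a geometric rate, and the theorem on uniform limits of derivatives identifies its
   sum with [f^(r)].  (b) Differentiation only shrinks supports, so (i)-(iii) persist with the same
   [L], and every [g_k^(r)] vanishes near [c].  (c) Multiplying by [h] shrinks supports and scales
   [C^r] norms boundedly; [g], which vanishes near [c], is absorbed into one term [c_K g_K] with
   [2^-K] below its distance to [c], at the cost [L + 1].  (d) An isometry is affine with slope
   [+-1], hence a diffeomorphism.  (e) A diffeomorphism distorts distances to the endpoint by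
   bounded factors, so an annulus of width [eps] in the new interval meets only supports
   attached to [m + 1] dyadic annuli in [J], giving [L' = (m + 1) L + 1].  Before (c) and (e)
   the series is re-indexed to start at a large [k0]. *)

From Pilot Require Import Defs.
From Stdlib Require Import Reals ZArith List.
From Coquelicot Require Import Coquelicot.
From Stdlib Require Import Lra Lia Classical ClassicalEpsilon
                           FunctionalExtensionality PropExtensionality.
Open Scope R_scope.
(* Coquelicot's [pow2 : nat -> nat] would otherwise shadow [Defs.pow2]. *)
Local Notation pow2 := Defs.pow2.

Lemma endpoint_Icc a b c : a < b -> c = a \/ c = b -> Icc a b c.
Proof. unfold Icc. intros Hab [-> | ->]; lra. Qed.

(** * Derivatives within an interval *)

Definition pointed_nbhs (a b x : R) : (R -> Prop) -> Prop :=
  within (fun y => Icc a b y /\ y <> x) (locally x).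

Definition slope (f : R -> R) (x y : R) : R := (f y - f x) / (y - x).

Definition derivable_on (a b : R) (f : R -> R) : Prop :=
  forall x, Icc a b x -> exists l, is_derive_within a b f x l.

Lemma filterlim_Rplus_fun {F : (R -> Prop) -> Prop} {FF : Filter F} (u v : R -> R) (lu lv : R) :
  filterlim u F (locally lu) -> filterlim v F (locally lv) ->
  filterlim (fun y => u y + v y) F (locally (lu + lv)).
Proof. intros Hu Hv. exact (filterlim_comp_2 u v Rplus Hu Hv (filterlim_plus lu lv)). Qed.

Lemma filterlim_Rmult_fun {F : (R -> Prop) -> Prop} {FF : Filter F} (u v : R -> R) (lu lv : R) :
  filterlim u F (locally lu) -> filterlim v F (locally lv) ->
  filterlim (fun y => u y * v y) F (locally (lu * lv)).
Proof. intros Hu Hv. exact (filterlim_comp_2 u v Rmult Hu Hv (filterlim_mult lu lv)). Qed.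

Lemma pointed_nbhs_filter a b x : Filter (pointed_nbhs a b x).
Proof. apply within_filter, locally_filter. Qed.
#[local] Hint Resolve pointed_nbhs_filter : core.

Section WithinDerivative.
Variables a b : R.

Lemma Icc_punctured_near x : a < b -> Icc a b x -> forall d, 0 < d ->
  exists y, Icc a b y /\ y <> x /\ Rabs (y - x) < d.
Proof.
  unfold Icc; intros Hab Hx d Hd.
  set (t := Rmin d (b - a) / 2).
  assert (Ht : 0 < t /\ t < d /\ 2 * t <= b - a).
  { unfold t. destruct (Rle_dec d (b - a));
      [rewrite Rmin_left by lra | rewrite Rmin_right by lra]; lra. }
  destruct (Rle_dec (x + t) b).
  - exists (x + t). rewrite Rabs_right; unfold Icc; lra.
  - exists (x - t). rewrite Rabs_left; unfold Icc; lra.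
Qed.

Lemma pointed_nbhs_proper x : a < b -> Icc a b x -> ProperFilter (pointed_nbhs a b x).
Proof.
  intros Hab Hx. split; auto.
  intros P [e HP]. destruct (Icc_punctured_near x Hab Hx e (cond_pos e)) as (y & Hy & Hyx & Hyd).
  exists y. apply HP; auto.
Qed.

Lemma pointed_nbhs_ball x (P : R -> Prop) e : 0 < e ->
  (forall y, Icc a b y -> y <> x -> Rabs (y - x) < e -> P y) -> pointed_nbhs a b x P.
Proof. intros He H. exists (mkposreal e He). intros y Hy [Hy1 Hy2]. auto. Qed.

Lemma pointed_nbhs_everywhere x (P : R -> Prop) :
  (forall y, Icc a b y -> y <> x -> P y) -> pointed_nbhs a b x P.
Proof. intros H. apply (pointed_nbhs_ball x P 1 Rlt_0_1). auto. Qed.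

Lemma is_derive_within_eps f x l : is_derive_within a b f x l <->
  forall eps, 0 < eps -> exists del, 0 < del /\ forall y, Icc a b y -> y <> x ->
    Rabs (y - x) < del -> Rabs (slope f x y - l) < eps.
Proof.
  split.
  - intros H eps Heps.
    destruct (H _ (locally_ball l (mkposreal eps Heps))) as [[del Hdel] Hd].
    exists del; split; auto. intros y Hy Hyx Hyd. exact (Hd y Hyd (conj Hy Hyx)).
  - intros H P [eps HP]. destruct (H eps (cond_pos eps)) as (del & Hdel & Hd).
    apply (pointed_nbhs_ball x _ del Hdel). intros y Hy Hyx Hyd. apply HP, Hd; auto.
Qed.

Lemma is_derive_within_eq f x l1 l2 : a < b -> Icc a b x ->
  is_derive_within a b f x l1 -> is_derive_within a b f x l2 -> l1 = l2.
Proof.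
  intros Hab Hx H1 H2. pose proof (pointed_nbhs_proper x Hab Hx).
  exact (filterlim_locally_unique (F := pointed_nbhs a b x) _ l1 l2 H1 H2).
Qed.

Lemma is_derive_within_unique f x l : a < b -> Icc a b x ->
  is_derive_within a b f x l -> Dw a b f x = l.
Proof.
  intros Hab Hx H. apply (is_derive_within_eq f x); auto.
  unfold Dw. apply epsilon_spec. exists l; exact H.
Qed.

Lemma Dw_correct f x : a < b -> derivable_on a b f -> Icc a b x ->
  is_derive_within a b f x (Dw a b f x).
Proof.
  intros Hab Hf Hx. destruct (Hf x Hx) as [l Hl].
  rewrite (is_derive_within_unique f x l); auto.
Qed.

Lemma is_derive_within_ext f g x l : Icc a b x -> (forall y, Icc a b y -> f y = g y) ->
  is_derive_within a b f x l -> is_derive_within a b g x l.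
Proof.
  intros Hx Hfg. apply filterlim_ext_loc.
  apply pointed_nbhs_everywhere. intros y Hy _. unfold slope. rewrite !Hfg; auto.
Qed.

Lemma Dw_ext f g x : Icc a b x -> (forall y, Icc a b y -> f y = g y) -> Dw a b f x = Dw a b g x.
Proof.
  intros Hx H. unfold Dw. f_equal.
  apply functional_extensionality; intros l. apply propositional_extensionality.
  split; apply is_derive_within_ext; auto. intros; symmetry; auto.
Qed.

Lemma filterlim_pointed_nbhs_id x : filterlim (fun y => y - x) (pointed_nbhs a b x) (locally 0).
Proof.
  intros P [e HP]. exists e. intros y Hy _. apply HP.
  change (Rabs (y - x - 0) < e). rewrite Rminus_0_r. exact Hy.
Qed.

Lemma is_derive_within_continuous f x l : is_derive_within a b f x l ->
  filterlim f (pointed_nbhs a b x) (locally (f x)).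
Proof.
  intros H.
  apply (filterlim_ext_loc (fun y => f x + slope f x y * (y - x))).
  - apply pointed_nbhs_everywhere. intros y _ Hyx. unfold slope. field. lra.
  - assert (Hl : filterlim (fun y => f x + slope f x y * (y - x)) (pointed_nbhs a b x)
                          (locally (f x + l * 0))).
    { apply filterlim_Rplus_fun; [apply filterlim_const|].
      apply filterlim_Rmult_fun; auto using filterlim_pointed_nbhs_id. }
    rewrite Rmult_0_r, Rplus_0_r in Hl. exact Hl.
Qed.

Lemma is_derive_within_continuous_eps f x l : is_derive_within a b f x l ->
  forall eps, 0 < eps -> exists del, 0 < del /\ forall y, Icc a b y -> Rabs (y - x) < del ->
    Rabs (f y - f x) < eps.
Proof.
  intros H eps Heps.
  destruct (is_derive_within_continuous f x l H _ (locally_ball (f x) (mkposreal eps Heps)))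
    as [[d Hd] Hd'].
  exists d; split; auto. intros y Hy Hyd.
  destruct (Req_dec y x) as [->|Hyx]; [rewrite Rminus_diag, Rabs_R0; auto|].
  exact (Hd' y Hyd (conj Hy Hyx)).
Qed.

Lemma is_derive_within_const (k : R) x : is_derive_within a b (fun _ => k) x 0.
Proof.
  apply (filterlim_ext_loc (fun _ => 0)); [|apply filterlim_const].
  apply pointed_nbhs_everywhere. intros y _ Hyx. unfold slope. field. lra.
Qed.

Lemma is_derive_within_id x : is_derive_within a b (fun y => y) x 1.
Proof.
  apply (filterlim_ext_loc (fun _ => 1)); [|apply filterlim_const].
  apply pointed_nbhs_everywhere. intros y _ Hyx. unfold slope. field. lra.
Qed.

Lemma is_derive_within_plus f g x l1 l2 :
  is_derive_within a b f x l1 -> is_derive_within a b g x l2 ->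
  is_derive_within a b (fun y => f y + g y) x (l1 + l2).
Proof.
  intros H1 H2.
  apply (filterlim_ext_loc (fun y => slope f x y + slope g x y)).
  - apply pointed_nbhs_everywhere. intros y _ Hyx. unfold slope. field. lra.
  - apply filterlim_Rplus_fun; auto.
Qed.

Lemma is_derive_within_mult f g x l1 l2 :
  is_derive_within a b f x l1 -> is_derive_within a b g x l2 ->
  is_derive_within a b (fun y => f y * g y) x (l1 * g x + f x * l2).
Proof.
  intros H1 H2. pose proof (is_derive_within_continuous f x l1 H1) as Hf.
  apply (filterlim_ext_loc (fun y => f y * slope g x y + g x * slope f x y)).
  - apply pointed_nbhs_everywhere. intros y _ Hyx. unfold slope. field. lra.
  - replace (l1 * g x + f x * l2) with (f x * l2 + g x * l1) by ring.
    apply filterlim_Rplus_fun; apply filterlim_Rmult_fun; try apply filterlim_const; auto.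
Qed.

Lemma is_derive_within_scal (k : R) f x l : is_derive_within a b f x l ->
  is_derive_within a b (fun y => k * f y) x (k * l).
Proof.
  intros H. replace (k * l) with (0 * f x + k * l) by ring.
  apply is_derive_within_mult; auto using is_derive_within_const.
Qed.

Lemma is_derive_within_minus f g x l1 l2 :
  is_derive_within a b f x l1 -> is_derive_within a b g x l2 ->
  is_derive_within a b (fun y => f y - g y) x (l1 - l2).
Proof.
  intros H1 H2. replace (l1 - l2) with (l1 + -1 * l2) by ring.
  apply (filterlim_ext_loc (fun y => slope (fun y => f y + -1 * g y) x y)).
  - apply pointed_nbhs_everywhere. intros y _ Hyx. unfold slope. field. lra.
  - apply is_derive_within_plus, is_derive_within_scal; auto.
Qed.
End WithinDerivative.

Lemma is_derive_within_comp a b a' b' (F d : R -> R) x l1 l2 :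
  (forall y, Icc a' b' y -> Icc a b (d y)) ->
  (forall y, Icc a' b' y -> d y = d x -> y = x) ->
  is_derive_within a b F (d x) l1 -> is_derive_within a' b' d x l2 ->
  is_derive_within a' b' (fun y => F (d y)) x (l1 * l2).
Proof.
  intros Hmap Hinj H1 H2.
  assert (Hd : filterlim d (pointed_nbhs a' b' x) (pointed_nbhs a b (d x))).
  { intros P [e HP].
    destruct (is_derive_within_continuous_eps _ _ _ _ _ H2 e (cond_pos e)) as (del & Hdel & Hdd).
    apply (pointed_nbhs_ball _ _ _ _ del Hdel). intros y Hy Hyx Hyd.
    apply HP; [exact (Hdd y Hy Hyd) | split; auto]. }
  apply (filterlim_ext_loc (fun y => slope F (d x) (d y) * slope d x y)).
  - apply pointed_nbhs_everywhere. intros y Hy Hyx. unfold slope.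
    assert (d y - d x <> 0) by (intros E; apply Hyx, Hinj; auto; lra).
    field. split; lra.
  - apply filterlim_Rmult_fun; auto. eapply filterlim_comp; [exact Hd | exact H1].
Qed.

Lemma is_derive_within_interior_min a b h x0 l : a < x0 < b -> is_derive_within a b h x0 l ->
  (forall x, Icc a b x -> h x0 <= h x) -> l = 0.
Proof.
  intros Hx0 Hd Hmin. rewrite is_derive_within_eps in Hd.
  destruct (Rtotal_order l 0) as [Hl|[Hl|Hl]]; auto; exfalso.
  - destruct (Hd (- l / 2)) as (del & Hdel & H); [lra|].
    set (t := Rmin del (b - x0) / 2).
    assert (0 < t /\ t < del /\ t < b - x0).
    { unfold t. pose proof (Rmin_l del (b - x0)). pose proof (Rmin_r del (b - x0)).
      assert (0 < Rmin del (b - x0)) by (apply Rmin_pos; lra). lra. }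
    specialize (H (x0 + t) ltac:(unfold Icc; lra) ltac:(lra) ltac:(rewrite Rabs_right; lra)).
    specialize (Hmin (x0 + t) ltac:(unfold Icc; lra)).
    unfold slope in H. replace (x0 + t - x0) with t in H by ring.
    assert (0 <= (h (x0 + t) - h x0) / t) by (apply Rdiv_le_0_compat; lra).
    unfold Rabs in H; destruct Rcase_abs in H; lra.
  - destruct (Hd (l / 2)) as (del & Hdel & H); [lra|].
    set (t := Rmin del (x0 - a) / 2).
    assert (0 < t /\ t < del /\ t < x0 - a).
    { unfold t. pose proof (Rmin_l del (x0 - a)). pose proof (Rmin_r del (x0 - a)).
      assert (0 < Rmin del (x0 - a)) by (apply Rmin_pos; lra). lra. }
    specialize (H (x0 - t) ltac:(unfold Icc; lra) ltac:(lra) ltac:(rewrite Rabs_left; lra)).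
    specialize (Hmin (x0 - t) ltac:(unfold Icc; lra)).
    unfold slope in H. replace (x0 - t - x0) with (- t) in H by ring.
    assert ((h (x0 - t) - h x0) / - t <= 0).
    { unfold Rdiv. rewrite Rinv_opp.
      assert (0 < / t) by (apply Rinv_0_lt_compat; lra). nra. }
    unfold Rabs in H; destruct Rcase_abs in H; lra.
Qed.

Definition derivable_upto (n : nat) (a b : R) (f : R -> R) : Prop :=
  forall m, (m <= n)%nat -> derivable_on a b (deriv_n a b f m).

Section HigherDerivatives.
Variables a b : R.

Lemma deriv_n_S_Dw f n : deriv_n a b f (S n) = deriv_n a b (Dw a b f) n.
Proof. induction n; [reflexivity|]. cbn [deriv_n] in *. rewrite IHn. reflexivity. Qed.

Lemma deriv_n_ext f g : (forall z, Icc a b z -> f z = g z) ->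
  forall n y, Icc a b y -> deriv_n a b f n y = deriv_n a b g n y.
Proof. intros H n. induction n; intros y Hy; simpl; auto. apply Dw_ext; auto. Qed.

Lemma derivable_on_ext f g : (forall z, Icc a b z -> f z = g z) ->
  derivable_on a b f -> derivable_on a b g.
Proof.
  intros H Hf x Hx. destruct (Hf x Hx) as [l Hl]. exists l.
  apply (is_derive_within_ext a b f); auto.
Qed.

Lemma derivable_upto_ext f g n : (forall z, Icc a b z -> f z = g z) ->
  derivable_upto n a b f -> derivable_upto n a b g.
Proof.
  intros H Hf m Hm. apply (derivable_on_ext (deriv_n a b f m)); auto.
  intros; apply deriv_n_ext; auto.
Qed.

Lemma derivable_upto_0 f : derivable_upto 0 a b f <-> derivable_on a b f.
Proof.
  split; [intros H; exact (H 0%nat (le_n 0))|].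
  intros H m Hm. replace m with 0%nat by lia. exact H.
Qed.

Lemma derivable_upto_S f n :
  derivable_upto (S n) a b f <-> derivable_on a b f /\ derivable_upto n a b (Dw a b f).
Proof.
  split.
  - intros H. split; [apply (H 0%nat); lia|].
    intros m Hm. rewrite <- deriv_n_S_Dw. apply H; lia.
  - intros [H0 H] [|m] Hm; [exact H0|]. rewrite deriv_n_S_Dw. apply H; lia.
Qed.

Lemma smooth_derivable_upto f : smooth a b f <-> forall n, derivable_upto n a b f.
Proof.
  split; [intros H n m _ x Hx; apply H; auto|].
  intros H n x Hx. apply (H n n); auto.
Qed.

Lemma smooth_derivable_on f : smooth a b f -> derivable_on a b f.
Proof. intros H x Hx. apply (H 0%nat x Hx). Qed.

Lemma smooth_Dw f : smooth a b f -> smooth a b (Dw a b f).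
Proof. intros H n x Hx. rewrite <- deriv_n_S_Dw. apply H; auto. Qed.

Lemma smooth_deriv_n f n : smooth a b f -> smooth a b (deriv_n a b f n).
Proof.
  revert f. induction n; intros f H; [exact H|].
  rewrite deriv_n_S_Dw. apply IHn, smooth_Dw, H.
Qed.

Lemma smooth_ext f g : (forall z, Icc a b z -> f z = g z) -> smooth a b f -> smooth a b g.
Proof.
  intros H Hf. apply smooth_derivable_upto. intros n.
  apply (derivable_upto_ext f); auto. apply smooth_derivable_upto; auto.
Qed.

Hypothesis Hab : a < b.

Lemma derivable_upto_const n (k : R) : derivable_upto n a b (fun _ => k).
Proof.
  revert k. induction n; intros k.
  - apply derivable_upto_0. intros x Hx. eexists; apply is_derive_within_const.
  - apply derivable_upto_S. split; [intros x Hx; eexists; apply is_derive_within_const|].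
    apply (derivable_upto_ext (fun _ => 0)); [|apply IHn].
    intros z Hz. symmetry. apply is_derive_within_unique, is_derive_within_const; auto.
Qed.

Lemma derivable_upto_plus n f g : derivable_upto n a b f -> derivable_upto n a b g ->
  derivable_upto n a b (fun x => f x + g x).
Proof.
  revert f g. induction n; intros f g Hf Hg.
  - apply derivable_upto_0. apply derivable_upto_0 in Hf, Hg. intros x Hx.
    destruct (Hf x Hx) as [l1 H1], (Hg x Hx) as [l2 H2].
    eexists; apply is_derive_within_plus; eauto.
  - apply derivable_upto_S in Hf as [Hf0 Hf], Hg as [Hg0 Hg].
    apply derivable_upto_S. split.
    + intros x Hx. destruct (Hf0 x Hx) as [l1 H1], (Hg0 x Hx) as [l2 H2].
      eexists; apply is_derive_within_plus; eauto.
    + apply (derivable_upto_ext (fun x => Dw a b f x + Dw a b g x)); [|apply IHn; auto].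
      intros z Hz. symmetry. apply is_derive_within_unique; auto.
      apply is_derive_within_plus; apply Dw_correct; auto.
Qed.

Lemma derivable_upto_mult n f g : derivable_upto n a b f -> derivable_upto n a b g ->
  derivable_upto n a b (fun x => f x * g x).
Proof.
  revert f g. induction n; intros f g Hf Hg.
  - apply derivable_upto_0. apply derivable_upto_0 in Hf, Hg. intros x Hx.
    destruct (Hf x Hx) as [l1 H1], (Hg x Hx) as [l2 H2].
    eexists; apply is_derive_within_mult; eauto.
  - assert (Hf' : derivable_upto n a b f) by (intros m Hm; apply Hf; lia).
    assert (Hg' : derivable_upto n a b g) by (intros m Hm; apply Hg; lia).
    apply derivable_upto_S in Hf as [Hf0 Hf], Hg as [Hg0 Hg].
    apply derivable_upto_S. split.
    + intros x Hx. destruct (Hf0 x Hx) as [l1 H1], (Hg0 x Hx) as [l2 H2].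
      eexists; apply is_derive_within_mult; eauto.
    + apply (derivable_upto_ext (fun x => Dw a b f x * g x + f x * Dw a b g x)).
      * intros z Hz. symmetry. apply is_derive_within_unique; auto.
        apply is_derive_within_mult; apply Dw_correct; auto.
      * apply derivable_upto_plus; apply IHn; auto.
Qed.

Lemma smooth_const (k : R) : smooth a b (fun _ => k).
Proof. apply smooth_derivable_upto. intros n. apply derivable_upto_const. Qed.

Lemma smooth_id : smooth a b (fun x => x).
Proof.
  apply smooth_derivable_upto. intros [|n].
  - apply derivable_upto_0. intros x Hx. eexists; apply is_derive_within_id.
  - apply derivable_upto_S. split; [intros x Hx; eexists; apply is_derive_within_id|].
    apply (derivable_upto_ext (fun _ => 1)); [|apply derivable_upto_const].
    intros z Hz. symmetry. apply is_derive_within_unique, is_derive_within_id; auto.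
Qed.

Lemma smooth_plus f g : smooth a b f -> smooth a b g -> smooth a b (fun x => f x + g x).
Proof.
  rewrite !smooth_derivable_upto. intros Hf Hg n. apply derivable_upto_plus; auto.
Qed.

Lemma smooth_mult f g : smooth a b f -> smooth a b g -> smooth a b (fun x => f x * g x).
Proof.
  rewrite !smooth_derivable_upto. intros Hf Hg n. apply derivable_upto_mult; auto.
Qed.

Lemma smooth_scal (k : R) f : smooth a b f -> smooth a b (fun x => k * f x).
Proof. intros Hf. apply smooth_mult; auto using smooth_const. Qed.

Lemma smooth_affine (u t : R) : smooth a b (fun x => u * x + t).
Proof. apply smooth_plus; [apply smooth_scal, smooth_id | apply smooth_const]. Qed.

Lemma deriv_n_plus n f g : smooth a b f -> smooth a b g -> forall y, Icc a b y ->
  deriv_n a b (fun x => f x + g x) n y = deriv_n a b f n y + deriv_n a b g n y.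
Proof.
  revert f g. induction n; intros f g Hf Hg y Hy; [reflexivity|].
  rewrite !deriv_n_S_Dw.
  rewrite (deriv_n_ext (Dw a b (fun x => f x + g x)) (fun x => Dw a b f x + Dw a b g x)); auto.
  - apply IHn; auto; apply smooth_Dw; auto.
  - intros z Hz. apply is_derive_within_unique; auto.
    apply is_derive_within_plus; apply Dw_correct; auto; apply smooth_derivable_on; auto.
Qed.

Lemma deriv_n_scal n (k : R) f : smooth a b f -> forall y, Icc a b y ->
  deriv_n a b (fun x => k * f x) n y = k * deriv_n a b f n y.
Proof.
  revert f. induction n; intros f Hf y Hy; [reflexivity|].
  rewrite !deriv_n_S_Dw.
  rewrite (deriv_n_ext (Dw a b (fun x => k * f x)) (fun x => k * Dw a b f x)); auto.
  - apply IHn; auto; apply smooth_Dw; auto.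
  - intros z Hz. apply is_derive_within_unique; auto.
    apply is_derive_within_scal; apply Dw_correct; auto; apply smooth_derivable_on; auto.
Qed.

End HigherDerivatives.

Definition sup_norm (a b : R) (u : R -> R) : R :=
  real (Lub_Rbar (fun y => exists x, Icc a b x /\ y = Rabs (u x))).

Definition bounded_on (a b : R) (u : R -> R) : Prop :=
  exists B, forall x, Icc a b x -> Rabs (u x) <= B.

Definition continuous_within (a b : R) (u : R -> R) : Prop :=
  forall x, Icc a b x -> forall eps, 0 < eps -> exists del, 0 < del /\
    forall y, Icc a b y -> Rabs (y - x) < del -> Rabs (u y - u x) < eps.

Definition clamp (a b x : R) : R := Rmax a (Rmin b x).

Lemma clamp_Icc a b x : a <= b -> Icc a b (clamp a b x).
Proof. intros. unfold clamp, Icc, Rmax, Rmin. repeat destruct Rle_dec; lra. Qed.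

Lemma clamp_id a b x : Icc a b x -> clamp a b x = x.
Proof. unfold clamp, Icc, Rmax, Rmin. intros. repeat destruct Rle_dec; lra. Qed.

Lemma clamp_dist a b x y : a <= b -> Icc a b y -> Rabs (clamp a b x - y) <= Rabs (x - y).
Proof.
  unfold clamp, Icc, Rmax, Rmin. intros.
  repeat destruct Rle_dec; unfold Rabs; repeat destruct Rcase_abs; lra.
Qed.

Lemma continuous_within_clamp a b u c : a <= b -> continuous_within a b u -> a <= c <= b ->
  continuity_pt (fun x => u (clamp a b x)) c.
Proof.
  intros Hab Hc Hcab eps Heps. destruct (Hc c Hcab eps Heps) as (del & Hdel & Hd).
  exists del. split; auto. intros y [_ Hy]. simpl in *. unfold R_dist in *.
  rewrite (clamp_id a b c Hcab). apply Hd; [apply clamp_Icc; lra|].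
  eapply Rle_lt_trans; [apply clamp_dist; auto | exact Hy].
Qed.

Lemma derivable_on_continuous a b u : derivable_on a b u -> continuous_within a b u.
Proof.
  intros H x Hx. destruct (H x Hx) as [l Hl].
  apply (is_derive_within_continuous_eps a b u x l Hl).
Qed.

Lemma continuous_within_bounded a b u : a < b -> continuous_within a b u -> bounded_on a b u.
Proof.
  intros Hab Hc.
  assert (HF : forall c, a <= c <= b -> continuity_pt (fun x => Rabs (u (clamp a b x))) c).
  { intros c Hcab. apply (continuity_pt_comp (fun x => u (clamp a b x)) Rabs).
    - apply continuous_within_clamp; auto; lra.
    - apply Rcontinuity_abs. }
  destruct (continuity_ab_maj _ a b (Rlt_le _ _ Hab) HF) as (M & HM & _).
  exists (Rabs (u (clamp a b M))). intros x Hx. specialize (HM x Hx).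
  rewrite clamp_id in HM; auto.
Qed.

Lemma smooth_bounded a b u : a < b -> smooth a b u -> bounded_on a b u.
Proof.
  intros Hab Hu. apply continuous_within_bounded, derivable_on_continuous; auto.
  apply smooth_derivable_on; auto.
Qed.

Section SupNorm.
Variables a b : R.

Let image (u : R -> R) := fun y => exists x, Icc a b x /\ y = Rabs (u x).

Lemma sup_norm_le u B : a <= b -> (forall x, Icc a b x -> Rabs (u x) <= B) -> sup_norm a b u <= B.
Proof.
  intros Hab H. unfold sup_norm. fold (image u).
  destruct (Lub_Rbar_correct (image u)) as [Hub Hlub].
  assert (H1 : Rbar_le (Rabs (u a)) (Lub_Rbar (image u))).
  { apply Hub. exists a; split; [unfold Icc; lra | auto]. }
  assert (H2 : Rbar_le (Lub_Rbar (image u)) B).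
  { apply Hlub. intros y [x [Hx ->]]. apply H; auto. }
  destruct (Lub_Rbar (image u)); simpl in *; auto; contradiction.
Qed.

Lemma sup_norm_ge u x : bounded_on a b u -> Icc a b x -> Rabs (u x) <= sup_norm a b u.
Proof.
  intros [B HB] Hx. unfold sup_norm. fold (image u).
  destruct (Lub_Rbar_correct (image u)) as [Hub Hlub].
  assert (H1 : Rbar_le (Rabs (u x)) (Lub_Rbar (image u))) by (apply Hub; exists x; auto).
  assert (H2 : Rbar_le (Lub_Rbar (image u)) B).
  { apply Hlub. intros y [z [Hz ->]]. apply HB; auto. }
  destruct (Lub_Rbar (image u)); simpl in *; auto; contradiction.
Qed.

Lemma sup_norm_nonneg u : a <= b -> 0 <= sup_norm a b u.
Proof.
  intros Hab. unfold sup_norm. fold (image u).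
  destruct (Lub_Rbar_correct (image u)) as [Hub _].
  assert (H1 : Rbar_le (Rabs (u a)) (Lub_Rbar (image u))).
  { apply Hub. exists a; split; [unfold Icc; lra | auto]. }
  pose proof (Rabs_pos (u a)).
  destruct (Lub_Rbar (image u)); simpl in *; lra.
Qed.

Lemma sup_norm_ext u v : (forall x, Icc a b x -> u x = v x) -> sup_norm a b u = sup_norm a b v.
Proof.
  intros H. unfold sup_norm. do 2 f_equal. apply functional_extensionality; intros y.
  apply propositional_extensionality.
  split; intros [x [Hx ->]]; exists x; split; auto; rewrite H; auto.
Qed.

Lemma sup_norm_plus u v : a <= b -> bounded_on a b u -> bounded_on a b v ->
  sup_norm a b (fun x => u x + v x) <= sup_norm a b u + sup_norm a b v.
Proof.
  intros Hab Hu Hv. apply sup_norm_le; auto. intros x Hx.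
  eapply Rle_trans; [apply Rabs_triang|]. apply Rplus_le_compat; apply sup_norm_ge; auto.
Qed.

Lemma sup_norm_mult u v : a <= b -> bounded_on a b u -> bounded_on a b v ->
  sup_norm a b (fun x => u x * v x) <= sup_norm a b u * sup_norm a b v.
Proof.
  intros Hab Hu Hv. apply sup_norm_le; auto. intros x Hx. rewrite Rabs_mult.
  apply Rmult_le_compat; try apply Rabs_pos; apply sup_norm_ge; auto.
Qed.

End SupNorm.

Section CrNorm.
Variables a b : R.
Hypothesis Hab : a < b.

Lemma Cnorm_sum_f_R0 r u :
  Cnorm a b r u = sum_f_R0 (fun i => sup_norm a b (deriv_n a b u i)) r.
Proof. unfold Cnorm. apply sum_n_Reals. Qed.

Lemma Cnorm_0 u : Cnorm a b 0 u = sup_norm a b u.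
Proof. rewrite Cnorm_sum_f_R0. reflexivity. Qed.

Lemma Cnorm_S r u : Cnorm a b (S r) u = sup_norm a b u + Cnorm a b r (Dw a b u).
Proof.
  rewrite !Cnorm_sum_f_R0, (decomp_sum _ (S r)) by lia. simpl pred. f_equal.
  apply sum_eq. intros i _. rewrite deriv_n_S_Dw. reflexivity.
Qed.

Lemma Cnorm_nonneg r u : 0 <= Cnorm a b r u.
Proof. rewrite Cnorm_sum_f_R0. apply cond_pos_sum. intros; apply sup_norm_nonneg; lra. Qed.

Lemma Cnorm_ext r u v : (forall x, Icc a b x -> u x = v x) -> Cnorm a b r u = Cnorm a b r v.
Proof.
  intros H. rewrite !Cnorm_sum_f_R0. apply sum_eq. intros i _.
  apply sup_norm_ext. intros; apply deriv_n_ext; auto.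
Qed.

Lemma Cnorm_le_S r u : Cnorm a b r u <= Cnorm a b (S r) u.
Proof.
  rewrite !Cnorm_sum_f_R0, tech5.
  pose proof (sup_norm_nonneg a b (deriv_n a b u (S r)) (Rlt_le _ _ Hab)). lra.
Qed.

Lemma sup_norm_le_Cnorm r u : sup_norm a b u <= Cnorm a b r u.
Proof.
  rewrite <- Cnorm_0. induction r; [lra|]. eapply Rle_trans; [exact IHr | apply Cnorm_le_S].
Qed.

Lemma Cnorm_Dw r u : Cnorm a b r (Dw a b u) <= Cnorm a b (S r) u.
Proof. rewrite Cnorm_S. pose proof (sup_norm_nonneg a b u (Rlt_le _ _ Hab)). lra. Qed.

Lemma Cnorm_deriv_n r s u : Cnorm a b r (deriv_n a b u s) <= Cnorm a b (r + s) u.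
Proof.
  revert u. induction s; intros u; [rewrite Nat.add_0_r; simpl; lra|].
  rewrite deriv_n_S_Dw. eapply Rle_trans; [apply IHs|].
  replace (r + S s)%nat with (S (r + s)) by lia. apply Cnorm_Dw.
Qed.

Lemma Cnorm_pointwise r u i x : smooth a b u -> (i <= r)%nat -> Icc a b x ->
  Rabs (deriv_n a b u i x) <= Cnorm a b r u.
Proof.
  intros Hu Hi Hx.
  eapply Rle_trans.
  { apply sup_norm_ge; [apply smooth_bounded, smooth_deriv_n; auto | exact Hx]. }
  eapply Rle_trans; [apply sup_norm_le_Cnorm with (r := (r - i)%nat)|].
  eapply Rle_trans; [apply Cnorm_deriv_n|]. replace (r - i + i)%nat with r by lia. lra.
Qed.

Lemma Cnorm_plus r u v : smooth a b u -> smooth a b v ->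
  Cnorm a b r (fun x => u x + v x) <= Cnorm a b r u + Cnorm a b r v.
Proof.
  intros Hu Hv. rewrite !Cnorm_sum_f_R0, <- sum_plus. apply sum_Rle. intros i _.
  rewrite (sup_norm_ext a b _ (fun x => deriv_n a b u i x + deriv_n a b v i x))
    by (intros; apply deriv_n_plus; auto).
  apply sup_norm_plus; try lra; apply smooth_bounded, smooth_deriv_n; auto.
Qed.

Lemma Cnorm_scal r (k : R) u : smooth a b u -> Cnorm a b r (fun x => k * u x) <= Rabs k * Cnorm a b r u.
Proof.
  intros Hu. rewrite !Cnorm_sum_f_R0, scal_sum. apply sum_Rle. intros i _.
  apply sup_norm_le; [lra|]. intros x Hx. rewrite deriv_n_scal, Rabs_mult, Rmult_comm by auto.
  apply Rmult_le_compat_r; [apply Rabs_pos|].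
  apply sup_norm_ge; auto. apply smooth_bounded, smooth_deriv_n; auto.
Qed.

Lemma Cnorm_mult_bound r h : smooth a b h -> exists K, 0 <= K /\ forall u, smooth a b u ->
  Cnorm a b r (fun x => h x * u x) <= K * Cnorm a b r u.
Proof.
  revert h. induction r; intros h Hh.
  - exists (sup_norm a b h). split; [apply sup_norm_nonneg; lra|]. intros u Hu.
    rewrite !Cnorm_0. apply sup_norm_mult; try lra; apply smooth_bounded; auto.
  - destruct (IHr h Hh) as (K1 & HK1 & H1).
    destruct (IHr (Dw a b h) (smooth_Dw _ _ _ Hh)) as (K2 & HK2 & H2).
    exists (sup_norm a b h + K2 + K1).
    split; [pose proof (sup_norm_nonneg a b h (Rlt_le _ _ Hab)); lra|].
    intros u Hu. rewrite Cnorm_S.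
    rewrite (Cnorm_ext r _ (fun x => Dw a b h x * u x + h x * Dw a b u x)).
    2:{ intros x Hx. apply is_derive_within_unique; auto.
        apply is_derive_within_mult; apply Dw_correct; auto; apply smooth_derivable_on; auto. }
    assert (Hsplit := Cnorm_plus r (fun x => Dw a b h x * u x) (fun x => h x * Dw a b u x)
      (smooth_mult a b Hab _ _ (smooth_Dw a b h Hh) Hu)
      (smooth_mult a b Hab _ _ Hh (smooth_Dw a b u Hu))).
    pose proof (H2 u Hu). pose proof (H1 (Dw a b u) (smooth_Dw _ _ _ Hu)).
    pose proof (sup_norm_mult a b h u ltac:(lra)
      (smooth_bounded a b h Hab Hh) (smooth_bounded a b u Hab Hu)).
    pose proof (sup_norm_le_Cnorm (S r) u). pose proof (Cnorm_le_S r u). pose proof (Cnorm_Dw r u).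
    pose proof (sup_norm_nonneg a b h (Rlt_le _ _ Hab)). pose proof (Cnorm_nonneg r u).
    assert (sup_norm a b h * sup_norm a b u <= sup_norm a b h * Cnorm a b (S r) u)
      by (apply Rmult_le_compat_l; auto).
    assert (K2 * Cnorm a b r u <= K2 * Cnorm a b (S r) u) by (apply Rmult_le_compat_l; auto).
    assert (K1 * Cnorm a b r (Dw a b u) <= K1 * Cnorm a b (S r) u) by (apply Rmult_le_compat_l; auto).
    nra.
Qed.

End CrNorm.

Lemma is_lim_seq_dist_le (u : nat -> R) (L v B : R) N : is_lim_seq u L ->
  (forall n, (N <= n)%nat -> Rabs (u n - v) <= B) -> Rabs (L - v) <= B.
Proof.
  intros Hu H.
  assert (Hd : is_lim_seq (fun n => Rabs (u n - v)) (Rabs (L - v))).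
  { apply (is_lim_seq_abs _ (L - v)), is_lim_seq_minus'; auto using is_lim_seq_const. }
  apply (is_lim_seq_le_loc _ (fun _ => B) _ _ (ex_intro _ N H) Hd (is_lim_seq_const B)).
Qed.

Lemma mean_value_ineq a b h h' B x y : a < b ->
  (forall z, Icc a b z -> is_derive_within a b h z (h' z)) ->
  (forall z, Icc a b z -> Rabs (h' z) <= B) ->
  Icc a b x -> Icc a b y -> Rabs (h y - h x) <= B * Rabs (y - x).
Proof.
  intros Hab Hd HB.
  assert (Main : forall x y, Icc a b x -> Icc a b y -> x < y -> Rabs (h y - h x) <= B * Rabs (y - x)).
  { clear x y. intros x y Hx Hy Hxy.
    assert (HI : forall z, x <= z <= y -> Icc a b z) by (unfold Icc in *; intros; lra).
    destruct (MVT_gen (fun z => h (clamp x y z)) x y h') as (c & Hc & HF);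
      rewrite Rmin_left, Rmax_right in * by lra.
    - intros z Hz. apply is_derive_Reals. intros eps Heps.
      destruct (proj1 (is_derive_within_eps a b h z (h' z)) (Hd z (HI z ltac:(lra))) eps Heps)
        as (del & Hdel & Hdd).
      assert (Hpos : 0 < Rmin del (Rmin (z - x) (y - z))) by (repeat apply Rmin_pos; lra).
      exists (mkposreal _ Hpos). intros k Hk Hkd. simpl in Hkd.
      pose proof (Rmin_l del (Rmin (z - x) (y - z))). pose proof (Rmin_r del (Rmin (z - x) (y - z))).
      pose proof (Rmin_l (z - x) (y - z)). pose proof (Rmin_r (z - x) (y - z)).
      assert (Hk2 : x <= z + k <= y) by (unfold Rabs in Hkd; destruct Rcase_abs; lra).
      rewrite !clamp_id by (unfold Icc; lra).
      specialize (Hdd (z + k) (HI _ Hk2) ltac:(lra) ltac:(replace (z + k - z) with k by ring; lra)).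
      unfold slope in Hdd. replace (z + k - z) with k in Hdd by ring. exact Hdd.
    - intros z Hz eps Heps.
      destruct (is_derive_within_continuous_eps a b h z (h' z) (Hd z (HI z Hz)) eps Heps)
        as (del & Hdel & Hdd).
      exists del. split; auto. intros w [_ Hw]. simpl in *. unfold R_dist in *.
      rewrite (clamp_id x y z Hz). apply Hdd; [apply HI, clamp_Icc; lra|].
      eapply Rle_lt_trans; [apply clamp_dist; auto; lra | exact Hw].
    - rewrite !clamp_id in HF by (unfold Icc; lra).
      rewrite HF, Rabs_mult. apply Rmult_le_compat_r; [apply Rabs_pos | apply HB, HI; lra]. }
  intros Hx Hy. destruct (Rtotal_order x y) as [H|[H|H]].
  - apply Main; auto.
  - subst. rewrite !Rminus_diag, Rabs_R0. pose proof (HB y Hy). pose proof (Rabs_pos (h' y)). nra.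
  - rewrite Rabs_minus_sym, (Rabs_minus_sym y). apply Main; auto.
Qed.

Lemma bounded_derivative_Lipschitz a b d : a < b -> smooth a b d ->
  exists C, 1 <= C /\ forall x y, Icc a b x -> Icc a b y -> Rabs (d x - d y) <= C * Rabs (x - y).
Proof.
  intros Hab Hd. destruct (smooth_bounded a b _ Hab (smooth_Dw _ _ _ Hd)) as [B HB].
  exists (Rmax 1 B). split; [apply Rmax_l|]. intros x y Hx Hy.
  rewrite Rabs_minus_sym, (Rabs_minus_sym x).
  apply (mean_value_ineq a b d (Dw a b d)); auto.
  - intros z Hz. apply Dw_correct; auto. apply smooth_derivable_on; auto.
  - intros z Hz. eapply Rle_trans; [apply HB; auto | apply Rmax_r].
Qed.

Lemma is_derive_within_uniform_limit a b (F F' : nat -> R -> R) (f f' : R -> R) (tau : nat -> R) :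
  a < b ->
  (forall m x, Icc a b x -> is_derive_within a b (F m) x (F' m x)) ->
  (forall x, Icc a b x -> is_lim_seq (fun m => F m x) (f x)) ->
  (forall m x, Icc a b x -> Rabs (F' m x - f' x) <= tau m) ->
  is_lim_seq tau 0 ->
  forall x, Icc a b x -> is_derive_within a b f x (f' x).
Proof.
  intros Hab HF Hf HG Ht x Hx. apply is_derive_within_eps. intros eps Heps.
  apply is_lim_seq_Reals in Ht. destruct (Ht (eps / 8)) as [N HN]; [lra|].
  assert (HN' : forall n, (n >= N)%nat -> forall z, Icc a b z -> Rabs (F' n z - f' z) < eps / 8).
  { intros n Hn z Hz. eapply Rle_lt_trans; [apply HG; auto|].
    specialize (HN n Hn). unfold R_dist in HN. rewrite Rminus_0_r in HN.
    eapply Rle_lt_trans; [apply RRle_abs | exact HN]. }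
  destruct (proj1 (is_derive_within_eps _ _ _ _ _) (HF N x Hx) (eps / 4)) as (del & Hdel & Hd); [lra|].
  exists del. split; auto. intros y Hy Hyx Hyd.
  assert (Hyx' : y - x <> 0) by lra.
  assert (Hapos : 0 < Rabs (y - x)) by (apply Rabs_pos_lt; auto).
  (* the increments of [F n - F N] are uniformly small by the mean value inequality *)
  assert (Key : Rabs ((f y - f x) - (F N y - F N x)) <= eps / 4 * Rabs (y - x)).
  { apply (is_lim_seq_dist_le (fun n => F n y - F n x) _ _ _ N).
    - apply is_lim_seq_minus'; auto.
    - intros n Hn.
      replace (F n y - F n x - (F N y - F N x)) with ((F n y - F N y) - (F n x - F N x)) by ring.
      apply (mean_value_ineq a b (fun z => F n z - F N z) (fun z => F' n z - F' N z)); auto.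
      + intros z Hz. apply is_derive_within_minus; auto.
      + intros z Hz. pose proof (HN' n Hn z Hz). pose proof (HN' N (le_n N) z Hz).
        replace (F' n z - F' N z) with ((F' n z - f' z) - (F' N z - f' z)) by ring.
        eapply Rle_trans; [apply Rabs_triang|]. rewrite Rabs_Ropp. lra. }
  pose proof (Hd y Hy Hyx Hyd) as H2. pose proof (HN' N (le_n N) x Hx) as H3. unfold slope in *.
  replace ((f y - f x) / (y - x) - f' x) with
    (((f y - f x) - (F N y - F N x)) / (y - x) + ((F N y - F N x) / (y - x) - F' N x) + (F' N x - f' x))
    by (field; auto).
  eapply Rle_lt_trans; [apply Rabs_triang|].
  eapply Rle_lt_trans; [apply Rplus_le_compat_r, Rabs_triang|].
  unfold Rdiv at 1. rewrite Rabs_mult, Rabs_inv.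
  assert (Rabs ((f y - f x) - (F N y - F N x)) * / Rabs (y - x) <= eps / 4).
  { apply (Rmult_le_reg_r (Rabs (y - x))); auto. rewrite Rmult_assoc, Rinv_l by lra. lra. }
  lra.
Qed.

Lemma half_pow_pos n : 0 < (/ 2) ^ n.
Proof. apply pow_lt. lra. Qed.

Lemma half_pow_le_1 n : (/ 2) ^ n <= 1.
Proof. induction n; simpl; [lra|]. pose proof (half_pow_pos n). nra. Qed.

Lemma is_lim_seq_half_pow (A : R) : is_lim_seq (fun m => A * (/ 2) ^ m) 0.
Proof.
  replace (Finite 0) with (Rbar_mult A 0) by (simpl; f_equal; ring).
  apply is_lim_seq_scal_l, is_lim_seq_geom. rewrite Rabs_right; lra.
Qed.

Lemma sum_f_R0_half_pow_diff (T : nat -> R) A : (forall n, Rabs (T n) <= A * (/ 2) ^ n) ->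
  forall m p, (m <= p)%nat -> Rabs (sum_f_R0 T p - sum_f_R0 T m) <= A * ((/ 2) ^ m - (/ 2) ^ p).
Proof.
  intros H m p Hmp. induction Hmp.
  - rewrite !Rminus_diag, Rabs_R0. lra.
  - rewrite tech5.
    replace (sum_f_R0 T m0 + T (S m0) - sum_f_R0 T m) with ((sum_f_R0 T m0 - sum_f_R0 T m) + T (S m0))
      by ring.
    eapply Rle_trans; [apply Rabs_triang|]. specialize (H (S m0)). simpl in H |- *. lra.
Qed.

Lemma sum_f_R0_half_pow_ex (T : nat -> R) A : (forall n, Rabs (T n) <= A * (/ 2) ^ n) ->
  exists l : R, is_lim_seq (sum_f_R0 T) l.
Proof.
  intros H.
  assert (Hex : ex_series T).
  { apply (ex_series_le T (fun n => A * (/ 2) ^ n)); [exact H|].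
    exists (A * / (1 - / 2)). apply (is_series_scal_l A (fun n => (/ 2) ^ n)).
    apply is_series_geom. rewrite Rabs_right; lra. }
  destruct Hex as [l Hl]. exists l.
  apply (is_lim_seq_ext (sum_n T)); [intros; apply sum_n_Reals | exact Hl].
Qed.

Lemma sum_f_R0_half_pow_tail (T : nat -> R) A (l : R) : (forall n, Rabs (T n) <= A * (/ 2) ^ n) ->
  is_lim_seq (sum_f_R0 T) l -> forall m, Rabs (sum_f_R0 T m - l) <= A * (/ 2) ^ m.
Proof.
  intros H Hl m. rewrite Rabs_minus_sym.
  apply (is_lim_seq_dist_le _ l _ _ m Hl). intros n Hn.
  eapply Rle_trans; [apply sum_f_R0_half_pow_diff; eauto|].
  assert (0 <= A) by (specialize (H 0%nat); pose proof (Rabs_pos (T 0%nat)); simpl in H; lra).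
  pose proof (half_pow_pos n). nra.
Qed.

Lemma is_lim_seq_half_pow_rate (u : nat -> R) (l A : R) :
  (forall m, Rabs (u m - l) <= A * (/ 2) ^ m) -> is_lim_seq u l.
Proof.
  intros H. apply (is_lim_seq_le_le (fun m => l - A * (/ 2) ^ m) u (fun m => l + A * (/ 2) ^ m)).
  - intros m. specialize (H m). unfold Rabs in H. destruct Rcase_abs in H; lra.
  - pose proof (is_lim_seq_minus' _ _ l 0 (is_lim_seq_const l) (is_lim_seq_half_pow A)) as Hm.
    rewrite Rminus_0_r in Hm. exact Hm.
  - pose proof (is_lim_seq_plus' _ _ l 0 (is_lim_seq_const l) (is_lim_seq_half_pow A)) as Hp.
    rewrite Rplus_0_r in Hp. exact Hp.
Qed.

Lemma pow2_positive t : 0 < pow2 t.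
Proof. apply exp_pos. Qed.

Lemma pow2_plus s t : pow2 (s + t) = pow2 s * pow2 t.
Proof. apply Rpower_plus. Qed.

Lemma pow2_le s t : s <= t -> pow2 s <= pow2 t.
Proof. intros H. apply Rle_Rpower; lra. Qed.

Lemma pow2_opp_INR (n : nat) : pow2 (- INR n) = (/ 2) ^ n.
Proof. unfold pow2. rewrite Rpower_Ropp, Rpower_pow, pow_inv by lra. reflexivity. Qed.

Lemma IZR_add_of_nat k0 n : IZR (k0 + Z.of_nat n) = IZR k0 + INR n.
Proof. rewrite plus_IZR, <- INR_IZR_INZ. reflexivity. Qed.

Lemma is_lim_seq_0_bounded (u : nat -> R) : is_lim_seq u 0 -> exists B, forall n, Rabs (u n) <= B.
Proof.
  intros H. apply is_lim_seq_Reals, cv_cvabs, (fun h => CV_Cauchy _ (exist _ _ h)), cauchy_bound in H.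
  destruct H as [B HB]. exists B. intros n. apply HB. exists n. reflexivity.
Qed.

(* Split [2^k] as [2^(k (1 - g))] (killed by the super-exponential decay of [cs]) times [2^(k g)]
   (which controls the exponential growth of [s]). *)
Lemma super_exp_mult_at_most_exp k0 (cs s : Z -> R) :
  super_exp_zero k0 cs -> at_most_exp k0 s ->
  exists A, forall n, Rabs (cs (k0 + Z.of_nat n)%Z * s (k0 + Z.of_nat n)%Z) <= A * (/ 2) ^ n.
Proof.
  intros Hcs [g [M HM]].
  destruct (is_lim_seq_0_bounded _ (Hcs (1 - g))) as [B HB].
  exists (B * M * pow2 (- IZR k0)). intros n.
  specialize (HB n). specialize (HM (k0 + Z.of_nat n)%Z ltac:(lia)).
  set (k := (k0 + Z.of_nat n)%Z) in *. set (t := IZR k).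
  assert (E : cs k * s k = (pow2 (t * (1 - g)) * cs k) * (pow2 (t * g) * s k) * pow2 (- t)).
  { transitivity (cs k * s k * (pow2 (t * (1 - g) + t * g + - t))).
    - replace (t * (1 - g) + t * g + - t) with 0 by ring. unfold pow2. rewrite Rpower_O; lra.
    - rewrite !pow2_plus. ring. }
  assert (Et : pow2 (- t) = pow2 (- IZR k0) * (/ 2) ^ n).
  { unfold t, k. rewrite IZR_add_of_nat, <- pow2_opp_INR, <- pow2_plus. f_equal. ring. }
  pose proof (pow2_positive (- IZR k0)). pose proof (half_pow_pos n).
  set (X := pow2 (t * (1 - g)) * cs k) in *. set (Y := pow2 (t * g) * s k) in *.
  rewrite E, Et, !(Rabs_mult (_ * _)), (Rabs_right (pow2 _ * _)) by nra.
  assert (Rabs X * Rabs Y <= B * M) by (apply Rmult_le_compat; auto using Rabs_pos).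
  replace (B * M * pow2 (- IZR k0) * (/ 2) ^ n) with ((B * M) * (pow2 (- IZR k0) * (/ 2) ^ n)) by ring.
  rewrite Rabs_mult. apply Rmult_le_compat_r; nra.
Qed.

Lemma exists_pow2_opp_le (N : Z) (eps : R) : 0 < eps ->
  exists K, (N <= K)%Z /\ (0 <= K)%Z /\ pow2 (- IZR K) <= eps.
Proof.
  intros Heps. destruct (pow_lt_1_zero (/ 2) ltac:(rewrite Rabs_right; lra) eps Heps) as [n Hn].
  specialize (Hn n (le_n n)). rewrite Rabs_right in Hn by (apply Rle_ge, Rlt_le, half_pow_pos).
  exists (Z.max 0 N + Z.of_nat n)%Z. split; [lia|]. split; [lia|].
  eapply Rle_trans; [|apply Rlt_le, Hn]. rewrite <- pow2_opp_INR. apply pow2_le.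
  rewrite IZR_add_of_nat. assert (0 <= IZR (Z.max 0 N)) by (apply IZR_le; lia). lra.
Qed.

Lemma exists_half_pow_mult_le_1 (C : R) : 0 < C -> exists m, (/ 2) ^ (S m) * C <= 1.
Proof.
  intros HC. destruct (pow_lt_1_zero (/ 2) ltac:(rewrite Rabs_right; lra) (/ C)) as [m Hm];
    [apply Rinv_0_lt_compat; lra|].
  exists m. specialize (Hm (S m) ltac:(lia)).
  rewrite Rabs_right in Hm by (apply Rle_ge, Rlt_le, half_pow_pos).
  apply (Rmult_lt_compat_r C) in Hm; [|lra]. rewrite Rinv_l in Hm by lra. lra.
Qed.

Lemma at_most_exp_le k0 (s s' : Z -> R) :
  (forall k, (k0 <= k)%Z -> 0 <= s' k <= s k) -> at_most_exp k0 s -> at_most_exp k0 s'.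
Proof.
  intros Hle [g [M HM]]. exists g, M. intros k Hk. eapply Rle_trans; [|apply (HM k Hk)].
  pose proof (pow2_positive (IZR k * g)). specialize (Hle k Hk).
  rewrite !Rabs_mult, !(Rabs_right (pow2 _)), !Rabs_right by lra.
  apply Rmult_le_compat_l; lra.
Qed.

Lemma at_most_exp_gamma_le k0 (s : Z -> R) g g' M : g' <= g ->
  (forall k, (k0 <= k)%Z -> Rabs (pow2 (IZR k * g) * s k) <= M) ->
  forall k, (k0 <= k)%Z -> Rabs (pow2 (IZR k * g') * s k) <= pow2 (IZR k0 * (g' - g)) * M.
Proof.
  intros Hg HM k Hk.
  replace (pow2 (IZR k * g')) with (pow2 (IZR k * (g' - g)) * pow2 (IZR k * g))
    by (rewrite <- pow2_plus; f_equal; ring).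
  rewrite Rmult_assoc, Rabs_mult, (Rabs_right (pow2 _)) by (apply Rle_ge, Rlt_le, pow2_positive).
  apply Rmult_le_compat; [apply Rlt_le, pow2_positive | apply Rabs_pos | | apply HM, Hk].
  apply pow2_le. apply IZR_le in Hk. nra.
Qed.

Lemma at_most_exp_plus k0 (s1 s2 : Z -> R) :
  at_most_exp k0 s1 -> at_most_exp k0 s2 -> at_most_exp k0 (fun k => s1 k + s2 k).
Proof.
  intros (g1 & M1 & H1) (g2 & M2 & H2). set (g := Rmin g1 g2).
  exists g, (pow2 (IZR k0 * (g - g1)) * M1 + pow2 (IZR k0 * (g - g2)) * M2). intros k Hk.
  rewrite Rmult_plus_distr_l. eapply Rle_trans; [apply Rabs_triang|].
  apply Rplus_le_compat; apply at_most_exp_gamma_le; auto; [apply Rmin_l | apply Rmin_r].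
Qed.

Lemma at_most_exp_scal k0 (s : Z -> R) (C : R) : at_most_exp k0 s -> at_most_exp k0 (fun k => C * s k).
Proof.
  intros (g & M & H). exists g, (Rabs C * M). intros k Hk.
  replace (pow2 (IZR k * g) * (C * s k)) with (C * (pow2 (IZR k * g) * s k)) by ring.
  rewrite Rabs_mult. apply Rmult_le_compat_l; [apply Rabs_pos | auto].
Qed.

Lemma at_most_exp_single k0 (K : Z) (v : R) :
  at_most_exp k0 (fun k => if Z.eq_dec k K then v else 0).
Proof.
  exists 0, (Rabs v). intros k _. rewrite Rmult_0_r.
  replace (pow2 0) with 1 by (unfold pow2; rewrite Rpower_O; lra).
  destruct (Z.eq_dec k K); rewrite Rmult_1_l; [lra | rewrite Rabs_R0; apply Rabs_pos].
Qed.

(** * Termwise differentiation: part (a) *)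

Section TermwiseDerivatives.
Variables (a b : R) (k0 : Z) (cs : Z -> R) (gs : Z -> R -> R).
Hypothesis Hab : a < b.
Hypothesis Hsup : super_exp_zero k0 cs.
Hypothesis Hsm : forall k, (k0 <= k)%Z -> smooth a b (gs k).
Hypothesis Hexp : forall r : nat, at_most_exp k0 (fun k => Cnorm a b r (gs k)).

Definition partial_sum_deriv (i m : nat) (x : R) : R :=
  sum_f_R0 (fun n => cs (k0 + Z.of_nat n)%Z * deriv_n a b (gs (k0 + Z.of_nat n)%Z) i x) m.

Lemma smooth_term n : smooth a b (gs (k0 + Z.of_nat n)%Z).
Proof. apply Hsm. lia. Qed.

Lemma term_deriv_half_pow i : exists A, forall n x, Icc a b x ->
  Rabs (cs (k0 + Z.of_nat n)%Z * deriv_n a b (gs (k0 + Z.of_nat n)%Z) i x) <= A * (/ 2) ^ n.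
Proof.
  destruct (super_exp_mult_at_most_exp k0 cs _ Hsup (Hexp i)) as [A HA]. exists A. intros n x Hx.
  eapply Rle_trans; [|apply HA]. rewrite !Rabs_mult. apply Rmult_le_compat_l; [apply Rabs_pos|].
  eapply Rle_trans; [apply (Cnorm_pointwise a b Hab i); auto using smooth_term | apply RRle_abs].
Qed.

Lemma partial_sum_deriv_derive i m x : Icc a b x ->
  is_derive_within a b (partial_sum_deriv i m) x (partial_sum_deriv (S i) m x).
Proof.
  intros Hx. unfold partial_sum_deriv. induction m; cbn [sum_f_R0].
  - apply is_derive_within_scal, Dw_correct; auto.
    apply smooth_derivable_on, smooth_deriv_n, smooth_term.
  - apply is_derive_within_plus; auto. apply is_derive_within_scal, Dw_correct; auto.
    apply smooth_derivable_on, smooth_deriv_n, smooth_term.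
Qed.

Lemma smooth_partial_sum_deriv i m : smooth a b (partial_sum_deriv i m).
Proof.
  unfold partial_sum_deriv. induction m; cbn [sum_f_R0].
  - apply smooth_scal, smooth_deriv_n, smooth_term; auto.
  - apply smooth_plus, smooth_scal, smooth_deriv_n, smooth_term; auto.
Qed.

Lemma deriv_n_partial_sum_deriv m i y : Icc a b y ->
  deriv_n a b (partial_sum_deriv 0 m) i y = partial_sum_deriv i m y.
Proof.
  intros Hy. induction m as [|m IHm].
  - apply (deriv_n_scal a b Hab); [apply smooth_deriv_n, smooth_term | exact Hy].
  - change (partial_sum_deriv 0 (S m)) with
      (fun x => partial_sum_deriv 0 m x + cs (k0 + Z.of_nat (S m))%Z * gs (k0 + Z.of_nat (S m))%Z x).
    rewrite deriv_n_plus, deriv_n_scal, IHm; auto using smooth_term, smooth_partial_sum_deriv.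
    apply smooth_scal, smooth_term; auto.
Qed.

Lemma partial_sum_deriv_0 m x : partial_sum_deriv 0 m x = partial_sum k0 cs gs m x.
Proof. unfold partial_sum. rewrite sum_n_Reals. reflexivity. Qed.

(* The derivatives of the partial sums converge at a geometric rate; passing to the limit in the
   derivative (uniform convergence) identifies each limit with the next derivative of [f]. *)
Lemma partial_sum_deriv_rate f : sums_to a b k0 cs gs f -> forall i, exists A, forall m x, Icc a b x ->
  Rabs (partial_sum_deriv i m x - deriv_n a b f i x) <= A * (/ 2) ^ m.
Proof.
  intros Hsum i. induction i as [|i [A0 IH]].
  - destruct (term_deriv_half_pow 0) as [A HA]. exists A. intros m x Hx.
    apply (sum_f_R0_half_pow_tail _ A); [intros; apply HA; auto|].
    apply (is_lim_seq_ext (fun m => partial_sum k0 cs gs m x));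
      [intros; symmetry; apply partial_sum_deriv_0|].
    apply Hsum; auto.
  - destruct (term_deriv_half_pow (S i)) as [A HA]. exists A.
    assert (Hlim : forall x, Icc a b x ->
      exists l : R, is_lim_seq (fun m => partial_sum_deriv (S i) m x) l).
    { intros x Hx. apply (sum_f_R0_half_pow_ex _ A). intros; apply HA; auto. }
    set (G := fun x => real (Lim_seq (fun m => partial_sum_deriv (S i) m x))).
    assert (HG : forall x, Icc a b x -> is_lim_seq (fun m => partial_sum_deriv (S i) m x) (G x)).
    { intros x Hx. destruct (Hlim x Hx) as [l Hl]. unfold G.
      rewrite (is_lim_seq_unique _ _ Hl). exact Hl. }
    assert (HGrate : forall m x, Icc a b x -> Rabs (partial_sum_deriv (S i) m x - G x) <= A * (/ 2) ^ m).
    { intros m x Hx. apply (sum_f_R0_half_pow_tail _ A); [intros; apply HA; auto | apply HG; auto]. }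
    assert (HD : forall x, Icc a b x -> is_derive_within a b (deriv_n a b f i) x (G x)).
    { apply (is_derive_within_uniform_limit a b (partial_sum_deriv i) (partial_sum_deriv (S i))
               _ G (fun m => A * (/ 2) ^ m)); auto using partial_sum_deriv_derive, is_lim_seq_half_pow.
      intros x Hx. apply (is_lim_seq_half_pow_rate _ _ A0). intros; apply IH; auto. }
    intros m x Hx. simpl deriv_n. rewrite (is_derive_within_unique a b _ x (G x)); auto.
Qed.

Lemma Cnorm_partial_sum_sub_half_pow f : sums_to a b k0 cs gs f -> smooth a b f -> forall r,
  exists C, forall m, Cnorm a b r (fun x => partial_sum k0 cs gs m x - f x) <= C * (/ 2) ^ m.
Proof.
  intros Hsum Hf.
  assert (Hderiv : forall m i y, Icc a b y ->
    deriv_n a b (fun x => partial_sum k0 cs gs m x - f x) i y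
      = partial_sum_deriv i m y - deriv_n a b f i y).
  { intros m i y Hy.
    rewrite (deriv_n_ext a b _ (fun x => partial_sum_deriv 0 m x + (-1) * f x)).
    - rewrite deriv_n_plus, deriv_n_scal, deriv_n_partial_sum_deriv;
        auto using smooth_partial_sum_deriv, smooth_scal; ring.
    - intros z Hz. rewrite partial_sum_deriv_0. ring.
    - exact Hy. }
  assert (Hsup_i : forall i, exists A, forall m,
    sup_norm a b (deriv_n a b (fun x => partial_sum k0 cs gs m x - f x) i) <= A * (/ 2) ^ m).
  { intros i. destruct (partial_sum_deriv_rate f Hsum i) as [A HA]. exists A. intros m.
    apply sup_norm_le; [lra|]. intros x Hx. rewrite Hderiv; auto. }
  intros r. induction r as [|r [C HC]].
  - destruct (Hsup_i 0%nat) as [A HA]. exists A. intros m. rewrite Cnorm_0; auto. apply HA.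
  - destruct (Hsup_i (S r)) as [A HA]. exists (C + A). intros m.
    rewrite Cnorm_sum_f_R0, tech5, <- Cnorm_sum_f_R0. specialize (HC m). specialize (HA m). lra.
Qed.

End TermwiseDerivatives.

Lemma partial_sums_Cnorm_cv a b c k0 cs gs f : a < b -> pliable_series a b c k0 cs gs ->
  sums_to a b k0 cs gs f -> smooth a b f -> forall r : nat,
  is_lim_seq (fun m => Cnorm a b r (fun x => partial_sum k0 cs gs m x - f x)) 0.
Proof.
  intros Hab (_ & Hsup & Hsm & _ & Hexp & _) Hsum Hf r.
  destruct (Cnorm_partial_sum_sub_half_pow a b k0 cs gs Hab Hsup (fun k Hk => proj1 (Hsm k Hk)) Hexp
              f Hsum Hf r) as [C HC].
  apply (is_lim_seq_le_le (fun _ => 0) _ (fun m => C * (/ 2) ^ m)).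
  - intros m. split; [apply Cnorm_nonneg; auto | apply HC].
  - apply is_lim_seq_const.
  - apply is_lim_seq_half_pow.
Qed.

(** * Supports *)

Section Support.
Variables a b : R.

Lemma not_supp_vanishes_near g x : ~ supp a b g x -> Icc a b x ->
  exists e, 0 < e /\ forall y, Icc a b y -> Rabs (y - x) < e -> g y = 0.
Proof.
  intros H Hx. apply NNPP. intros Hn. apply H. split; auto. intros eps Heps.
  apply NNPP. intros Hn2. apply Hn. exists eps. split; auto. intros y Hy Hyd.
  apply NNPP. intros Hg. apply Hn2. exists y. auto.
Qed.

Lemma vanishes_near_not_supp g x e : 0 < e ->
  (forall y, Icc a b y -> Rabs (y - x) < e -> g y = 0) -> ~ supp a b g x.
Proof. intros He H [Hx Hs]. destruct (Hs e He) as (y & Hy & Hyd & Hg). apply Hg, H; auto. Qed.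

Lemma supp_far g c d x : (forall y, Icc a b y -> Rabs (y - c) < d -> g y = 0) ->
  supp a b g x -> d <= Rabs (x - c).
Proof.
  intros Hz [Hx Hs]. apply Rnot_lt_le. intros Hlt.
  destruct (Hs (d - Rabs (x - c))) as (y & Hy & Hyd & Hg); [lra|].
  apply Hg, Hz; auto. pose proof (Rabs_triang (y - x) (x - c)).
  replace (y - x + (x - c)) with (y - c) in H by ring. lra.
Qed.

Lemma supp_plus u v x : supp a b (fun y => u y + v y) x -> supp a b u x \/ supp a b v x.
Proof.
  intros Hs. apply NNPP. intros Hn. apply not_or_and in Hn as [Hu Hv].
  destruct (not_supp_vanishes_near u x Hu (proj1 Hs)) as (e1 & He1 & H1).
  destruct (not_supp_vanishes_near v x Hv (proj1 Hs)) as (e2 & He2 & H2).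
  apply (vanishes_near_not_supp (fun y => u y + v y) x (Rmin e1 e2) (Rmin_pos _ _ He1 He2)); auto.
  intros y Hy Hyd. pose proof (Rmin_l e1 e2). pose proof (Rmin_r e1 e2). rewrite H1, H2; auto; lra.
Qed.

Lemma supp_mult h u x : supp a b (fun y => h y * u y) x -> supp a b u x.
Proof.
  intros Hs. apply NNPP. intros Hn.
  destruct (not_supp_vanishes_near u x Hn (proj1 Hs)) as (e & He & H).
  apply (vanishes_near_not_supp (fun y => h y * u y) x e He); auto.
  intros y Hy Hyd. rewrite H; auto; ring.
Qed.

Lemma not_supp_of_zero u x : (forall y, Icc a b y -> u y = 0) -> ~ supp a b u x.
Proof. intros Hu [_ Hs]. destruct (Hs 1) as (y & Hy & _ & Hne); [lra | auto]. Qed.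

Hypothesis Hab : a < b.

Lemma deriv_n_vanishes_near g x0 e : (forall y, Icc a b y -> Rabs (y - x0) < e -> g y = 0) ->
  forall n y, Icc a b y -> Rabs (y - x0) < e -> deriv_n a b g n y = 0.
Proof.
  intros H n. induction n; intros y Hy Hyd; simpl; auto.
  apply is_derive_within_unique; auto.
  apply (filterlim_ext_loc (fun _ => 0)); [|apply filterlim_const].
  apply (pointed_nbhs_ball a b y _ (e - Rabs (y - x0))); [lra|].
  intros z Hz Hzy Hzd. unfold slope. rewrite !IHn; auto; [unfold Rdiv; ring|].
  pose proof (Rabs_triang (z - y) (y - x0)). replace (z - y + (y - x0)) with (z - x0) in H0 by ring.
  lra.
Qed.

Lemma supp_deriv_n g n x : supp a b (deriv_n a b g n) x -> supp a b g x.
Proof.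
  intros Hs. apply NNPP. intros Hn.
  destruct (not_supp_vanishes_near g x Hn (proj1 Hs)) as (e & He & Hz).
  apply (vanishes_near_not_supp (deriv_n a b g n) x e He); auto.
  intros y Hy Hyd. apply (deriv_n_vanishes_near g x e); auto.
Qed.

Lemma deriv_n_not_supp g n x : Icc a b x -> ~ supp a b g x -> deriv_n a b g n x = 0.
Proof.
  intros Hx Hn. destruct (not_supp_vanishes_near g x Hn Hx) as (e & He & Hz).
  apply (deriv_n_vanishes_near g x e); auto. rewrite Rminus_diag, Rabs_R0; auto.
Qed.

End Support.

Definition at_most_card (L : R) (A : Z -> Prop) : Prop :=
  forall l : list Z, NoDup l -> (forall k, In k l -> A k) -> INR (length l) <= L.

Lemma at_most_card_mono L (A B : Z -> Prop) :
  (forall k, A k -> B k) -> at_most_card L B -> at_most_card L A.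
Proof. intros HAB H l Hl Hin. apply H; auto. Qed.

Lemma at_most_card_split L1 L2 (A P : Z -> Prop) :
  at_most_card L1 (fun k => A k /\ P k) -> at_most_card L2 (fun k => A k /\ ~ P k) ->
  at_most_card (L1 + L2) A.
Proof.
  intros H1 H2 l Hl Hin.
  set (p := fun k => if excluded_middle_informative (P k) then true else false).
  rewrite <- (filter_length p l), plus_INR.
  apply Rplus_le_compat; [apply H1 | apply H2]; try apply NoDup_filter; auto;
    intros k Hk; apply filter_In in Hk as [Hk Hpk]; unfold p in Hpk;
    destruct excluded_middle_informative; try discriminate; auto.
Qed.

Lemma at_most_card_singleton K : at_most_card 1 (fun k => k = K).
Proof.
  intros [|x [|y l]] Hl Hin; simpl; try lra.
  exfalso. inversion Hl as [|? ? Hx]. apply Hx. left.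
  rewrite (Hin x), (Hin y); simpl; auto.
Qed.

Lemma at_most_card_add1 L (A : Z -> Prop) K :
  at_most_card L A -> at_most_card (L + 1) (fun k => A k \/ k = K).
Proof.
  intros H. rewrite Rplus_comm. apply (at_most_card_split _ _ _ (fun k => k = K)).
  - apply (at_most_card_mono _ _ _ (fun k Hk => proj2 Hk)), at_most_card_singleton.
  - apply (at_most_card_mono _ _ A); [|exact H].
    intros k [[Hk|Hk] Hn]; [exact Hk | contradiction].
Qed.

Lemma at_most_card_union L (A : nat -> Z -> Prop) m :
  (forall i, (i <= m)%nat -> at_most_card L (A i)) ->
  at_most_card (INR (S m) * L) (fun k => exists i, (i <= m)%nat /\ A i k).
Proof.
  induction m as [|m IH]; intros HA.
  - rewrite Rmult_1_l. apply (at_most_card_mono _ _ (A 0%nat)); [|apply HA; lia].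
    intros k (i & Hi & H). replace i with 0%nat in H by lia. exact H.
  - rewrite S_INR, Rmult_plus_distr_r, Rmult_1_l, Rplus_comm.
    apply (at_most_card_split _ _ _ (A (S m))).
    + apply (at_most_card_mono _ _ _ (fun k Hk => proj2 Hk)), HA; lia.
    + apply (at_most_card_mono _ _ (fun k => exists i, (i <= m)%nat /\ A i k)).
      * intros k [(i & Hi & H) Hn]. exists i. split; auto.
        destruct (Nat.eq_dec i (S m)); [subst; contradiction | lia].
      * apply IH. intros i Hi. apply HA. lia.
Qed.

Lemma at_most_card_shift L (A : Z -> Prop) (s : Z) :
  at_most_card L A -> at_most_card L (fun k => A (k - s)%Z).
Proof.
  intros H l Hl Hin. rewrite <- (length_map (fun k => (k - s)%Z)). apply H.
  - apply NoDup_map_NoDup_ForallPairs; auto. intros x y _ _ E. lia.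
  - intros k Hk. apply in_map_iff in Hk as (k' & <- & Hk'). auto.
Qed.

(** * Derivatives, products and sums of pliable series: parts (b) and (c) *)

Lemma pliable_series_supp_subset a b c k0 cs gs gs' : pliable_series a b c k0 cs gs ->
  (forall k, (k0 <= k)%Z -> smooth a b (gs' k)) ->
  (forall k x, supp a b (gs' k) x -> supp a b (gs k) x) ->
  (forall r, at_most_exp k0 (fun k => Cnorm a b r (gs' k))) ->
  pliable_series a b c k0 cs gs'.
Proof.
  intros (Hpos & Hsup & Hsm & Hlf & Hexp & L & HL & HJ) Hsm' Hsub Hexp'.
  assert (HJsub : forall eps k, Jeps a b c k0 gs' eps k -> Jeps a b c k0 gs eps k).
  { intros eps k [Hk (x & Hx & Hxd)]. split; auto. exists x. auto. }
  split; [exact Hpos|]. split; [exact Hsup|]. split.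
  { intros k Hk. split; auto. intros Hc. apply (proj2 (Hsm k Hk)), Hsub, Hc. }
  split.
  { intros x Hx Hxc. destruct (Hlf x Hx Hxc) as (d & Hd & N & HN).
    exists d. split; auto. exists N. intros k Hk HNk y Hy. apply (HN k); auto. }
  split; [exact Hexp'|].
  exists L. split; [exact HL|]. intros eps Heps. destruct (HJ eps Heps) as [HJ1 HJ2]. split.
  - exact (at_most_card_mono _ _ _ (HJsub eps) HJ1).
  - intros k Hk. apply HJ2, HJsub, Hk.
Qed.

Section Derivatives.
Variables (a b c : R) (k0 : Z) (cs : Z -> R) (gs : Z -> R -> R) (f : R -> R).
Hypothesis Hab : a < b.
Hypothesis Hc : c = a \/ c = b.
Hypothesis HP : pliable_series a b c k0 cs gs.
Hypothesis Hsum : sums_to a b k0 cs gs f.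

Lemma pliable_series_deriv_n r : pliable_series a b c k0 cs (fun k => deriv_n a b (gs k) r).
Proof.
  destruct HP as (_ & _ & Hsm & _ & Hexp & _).
  apply (pliable_series_supp_subset _ _ _ _ _ gs); auto.
  - intros k Hk. apply smooth_deriv_n, Hsm, Hk.
  - intros k x. apply supp_deriv_n; auto.
  - intros s. apply (at_most_exp_le _ _ _ (fun k Hk => conj (Cnorm_nonneg a b Hab s _)
                                                         (Cnorm_deriv_n a b Hab s r (gs k)))).
    apply Hexp.
Qed.

Lemma sums_to_deriv_n r : sums_to a b k0 cs (fun k => deriv_n a b (gs k) r) (deriv_n a b f r).
Proof.
  destruct HP as (_ & Hsup & Hsm & _ & Hexp & _).
  destruct (partial_sum_deriv_rate a b k0 cs gs Hab Hsup (fun k Hk => proj1 (Hsm k Hk)) Hexp f Hsum r)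
    as [A HA].
  intros x Hx. apply (is_lim_seq_half_pow_rate _ _ A). intros m.
  unfold partial_sum. rewrite sum_n_Reals. apply HA, Hx.
Qed.

Lemma deriv_n_endpoint r : deriv_n a b f r c = 0.
Proof.
  destruct HP as (_ & _ & Hsm & _).
  assert (Hcc : Icc a b c) by (apply endpoint_Icc; auto).
  assert (Hzero : forall m, partial_sum k0 cs (fun k => deriv_n a b (gs k) r) m c = 0).
  { intros m. unfold partial_sum. rewrite sum_n_Reals, (sum_eq _ (fun _ => 0)), sum_cte; [ring|].
    intros n _. rewrite (deriv_n_not_supp a b Hab); [ring | exact Hcc | apply Hsm; lia]. }
  pose proof (is_lim_seq_unique _ _ (sums_to_deriv_n r c Hcc)) as H1.
  rewrite (Lim_seq_ext _ _ Hzero), Lim_seq_const in H1. injection H1. auto.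
Qed.

Lemma pliable_deriv_n r : smooth a b f ->
  deriv_n a b f r c = 0 /\
  pliable_series a b c k0 cs (fun k => deriv_n a b (gs k) r) /\
  sums_to a b k0 cs (fun k => deriv_n a b (gs k) r) (deriv_n a b f r) /\
  pliable a b c (deriv_n a b f r).
Proof.
  intros Hf. split; [apply deriv_n_endpoint|].
  split; [apply pliable_series_deriv_n|]. split; [apply sums_to_deriv_n|].
  split; [exact Hc|]. split; [apply smooth_deriv_n, Hf|].
  exists k0, cs, (fun k => deriv_n a b (gs k) r).
  split; [apply pliable_series_deriv_n | apply sums_to_deriv_n].
Qed.

End Derivatives.

Lemma pliable_series_shift a b c k0 cs gs f (s : Z) : (0 <= s)%Z ->
  pliable_series a b c k0 cs gs -> sums_to a b k0 cs gs f ->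
  pliable_series a b c (k0 + s) (fun k => cs (k - s)%Z) (fun k => gs (k - s)%Z) /\
  sums_to a b (k0 + s) (fun k => cs (k - s)%Z) (fun k => gs (k - s)%Z) f.
Proof.
  intros Hs (Hpos & Hsup & Hsm & Hlf & Hexp & L & HL & HJ) Hsum.
  assert (Hidx : forall n, (k0 + s + Z.of_nat n - s = k0 + Z.of_nat n)%Z) by (intros; lia).
  assert (Hpow : forall k g, pow2 (IZR k * g) = pow2 (IZR s * g) * pow2 (IZR (k - s) * g)).
  { intros k g. rewrite <- pow2_plus, minus_IZR. f_equal. ring. }
  split; [split; [|split; [|split; [|split; [|split]]]]|].
  - intros k Hk. apply Hpos. lia.
  - intros g. apply (is_lim_seq_ext (fun n => pow2 (IZR s * g) *
      (pow2 (IZR (k0 + Z.of_nat n) * g) * cs (k0 + Z.of_nat n)%Z))).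
    + intros n. rewrite (Hpow (k0 + s + Z.of_nat n)%Z), Hidx. ring.
    + replace (Finite 0) with (Rbar_mult (pow2 (IZR s * g)) 0) by (simpl; f_equal; ring).
      apply is_lim_seq_scal_l, Hsup.
  - intros k Hk. apply Hsm. lia.
  - intros x Hx Hxc. destruct (Hlf x Hx Hxc) as (d & Hd & N & HN).
    exists d. split; auto. exists (N + s)%Z. intros k Hk HNk y Hy. apply (HN (k - s)%Z); auto; lia.
  - intros r. destruct (Hexp r) as (g & M & HM). exists g, (pow2 (IZR s * g) * M). intros k Hk.
    rewrite Hpow, Rmult_assoc, Rabs_mult, (Rabs_right (pow2 _)) by (apply Rle_ge, Rlt_le, pow2_positive).
    apply Rmult_le_compat_l; [apply Rlt_le, pow2_positive | apply HM; lia].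
  - exists L. split; [exact HL|]. intros eps Heps. destruct (HJ eps Heps) as [HJ1 HJ2].
    assert (Hsub : forall k, Jeps a b c (k0 + s) (fun k => gs (k - s)%Z) eps k ->
                             Jeps a b c k0 gs eps (k - s)%Z).
    { intros k [Hk Hx]. split; [lia | exact Hx]. }
    split.
    + exact (at_most_card_mono _ _ _ Hsub (at_most_card_shift _ _ s HJ1)).
    + intros k Hk. eapply Rle_trans; [|apply (HJ2 (k - s)%Z), Hsub, Hk].
      apply pow2_le. rewrite minus_IZR. apply IZR_le in Hs. nra.
  - intros x Hx. apply (is_lim_seq_ext (fun m => partial_sum k0 cs gs m x)); auto.
    intros m. unfold partial_sum. rewrite !sum_n_Reals.
    apply sum_eq. intros i _. rewrite Hidx. reflexivity.
Qed.

Lemma pliable_series_large_start a b c k0 cs gs f (N : Z) :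
  pliable_series a b c k0 cs gs -> sums_to a b k0 cs gs f ->
  exists k1 cs' gs', (N <= k1)%Z /\ pliable_series a b c k1 cs' gs' /\ sums_to a b k1 cs' gs' f.
Proof.
  intros HP Hsum. set (s := Z.max 0 (N - k0)).
  destruct (pliable_series_shift a b c k0 cs gs f s ltac:(lia) HP Hsum) as [HP' Hsum'].
  exists (k0 + s)%Z, (fun k => cs (k - s)%Z), (fun k => gs (k - s)%Z). split; auto. lia.
Qed.

Section Multiplication.
Variables (a b c : R) (k0 : Z) (cs : Z -> R) (gs : Z -> R -> R) (f h : R -> R).
Hypothesis Hab : a < b.
Hypothesis HP : pliable_series a b c k0 cs gs.
Hypothesis Hh : smooth a b h.

Lemma pliable_series_mult : pliable_series a b c k0 cs (fun k x => h x * gs k x).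
Proof.
  destruct HP as (_ & _ & Hsm & _ & Hexp & _).
  apply (pliable_series_supp_subset _ _ _ _ _ gs); auto.
  - intros k Hk. apply smooth_mult, Hsm; auto.
  - intros k x. apply supp_mult.
  - intros r. destruct (Cnorm_mult_bound a b Hab r h Hh) as (C & HC & HCb).
    apply (at_most_exp_le _ (fun k => C * Cnorm a b r (gs k))).
    + intros k Hk. split; [apply Cnorm_nonneg; auto | apply HCb, Hsm, Hk].
    + apply at_most_exp_scal, Hexp.
Qed.

Lemma sums_to_mult : sums_to a b k0 cs gs f ->
  sums_to a b k0 cs (fun k x => h x * gs k x) (fun x => h x * f x).
Proof.
  intros Hsum x Hx. apply (is_lim_seq_ext (fun m => h x * partial_sum k0 cs gs m x)).
  - intros m. unfold partial_sum. rewrite !sum_n_Reals, scal_sum. apply sum_eq. intros; ring.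
  - apply (is_lim_seq_scal_l _ (h x) (f x)), Hsum, Hx.
Qed.

End Multiplication.

Lemma sum_f_R0_single (j m : nat) (v : R) :
  sum_f_R0 (fun n => if Nat.eq_dec n j then v else 0) m = if le_dec j m then v else 0.
Proof.
  induction m as [|m IH].
  - cbn [sum_f_R0]. destruct (Nat.eq_dec 0 j), (le_dec j 0); auto; lia.
  - rewrite tech5, IH. destruct (Nat.eq_dec (S m) j), (le_dec j m), (le_dec j (S m)); try lia; ring.
Qed.

Definition add_single (K : Z) (v : R -> R) (gs : Z -> R -> R) : Z -> R -> R :=
  fun k x => gs k x + (if Z.eq_dec k K then 1 else 0) * v x.

Section AddSingle.
Variables (a b c : R) (k0 : Z) (cs : Z -> R) (gs : Z -> R -> R) (g : R -> R) (K : Z) (d : R).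
Hypothesis Hab : a < b.
Hypothesis Hk0 : (0 <= k0)%Z.
Hypothesis HK : (k0 <= K)%Z.
Hypothesis HP : pliable_series a b c k0 cs gs.
Hypothesis Hg : smooth a b g.
Hypothesis Hgz : forall y, Icc a b y -> Rabs (y - c) < d -> g y = 0.
Hypothesis HKd : pow2 (- IZR K) <= d / 2.

(* The new term is scaled by [/ cs K], so that the series gains exactly [cs K * (/ cs K * g) = g]. *)
Let gs' := add_single K (fun x => / cs K * g x) gs.

Lemma supp_add_single k x : supp a b (gs' k) x -> supp a b (gs k) x \/ (k = K /\ supp a b g x).
Proof.
  intros Hs. apply supp_plus in Hs as [Hs | Hs]; [left; exact Hs | right].
  destruct (Z.eq_dec k K) as [E|Hne].
  - split; [exact E|]. do 2 apply supp_mult in Hs. exact Hs.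
  - exfalso. revert Hs. apply not_supp_of_zero. intros; ring.
Qed.

Lemma smooth_add_single k : smooth a b (gs k) -> smooth a b (gs' k).
Proof. intros Hk. apply smooth_plus, smooth_scal, smooth_scal; auto. Qed.

Lemma Cnorm_add_single r : at_most_exp k0 (fun k => Cnorm a b r (gs' k)).
Proof.
  destruct HP as (_ & _ & Hsm & _ & Hexp & _).
  set (Cv := Cnorm a b r (fun x => / cs K * g x)).
  apply (at_most_exp_le _ (fun k => Cnorm a b r (gs k) + (if Z.eq_dec k K then Cv else 0))).
  - intros k Hk. split; [apply Cnorm_nonneg; auto|].
    eapply Rle_trans; [apply Cnorm_plus; auto; [apply Hsm, Hk | apply smooth_scal, smooth_scal; auto]|].
    apply Rplus_le_compat_l. eapply Rle_trans; [apply Cnorm_scal; auto; apply smooth_scal; auto|].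
    pose proof (Cnorm_nonneg a b Hab r (fun x => / cs K * g x)).
    destruct (Z.eq_dec k K); rewrite ?Rabs_R1, ?Rabs_R0; unfold Cv; lra.
  - apply at_most_exp_plus; [apply Hexp | apply at_most_exp_single].
Qed.

Lemma pliable_series_add_single : pliable_series a b c k0 cs gs'.
Proof.
  pose proof HP as (Hpos & Hsup & Hsm & Hlf & _ & L & HL & HJ).
  split; [exact Hpos|]. split; [exact Hsup|]. split.
  { intros k Hk. split; [apply smooth_add_single, Hsm, Hk|].
    intros Hs. apply supp_add_single in Hs as [Hs | [_ Hs]].
    - exact (proj2 (Hsm k Hk) Hs).
    - pose proof (supp_far a b g c d c Hgz Hs) as Hd. rewrite Rminus_diag, Rabs_R0 in Hd.
      pose proof (pow2_positive (- IZR K)). lra. }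
  split.
  { intros x Hx Hxc. destruct (Hlf x Hx Hxc) as (del & Hdel & N & HN).
    exists del. split; auto. exists (Z.max N (K + 1)). intros k Hk HNk y Hy.
    apply supp_add_single in Hy as [Hy | [E _]]; [apply (HN k); auto; lia | lia]. }
  split; [apply Cnorm_add_single|].
  exists (L + 1). split; [lra|]. intros eps Heps. destruct (HJ eps Heps) as [HJ1 HJ2].
  assert (Hsub : forall k, Jeps a b c k0 gs' eps k -> Jeps a b c k0 gs eps k \/ (k = K /\ d / 2 <= eps)).
  { intros k [Hk (x & Hx & Hxd)]. apply supp_add_single in Hx as [Hx | [E Hx]].
    - left. split; auto. exists x. auto.
    - right. split; auto. pose proof (supp_far a b g c d x Hgz Hx). lra. }
  split.
  - apply (at_most_card_mono _ _ (fun k => Jeps a b c k0 gs eps k \/ k = K)).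
    + intros k Hk. destruct (Hsub k Hk) as [H | [H _]]; auto.
    + exact (at_most_card_add1 _ _ K HJ1).
  - intros k Hk. assert (HIK : 0 <= IZR K) by (apply IZR_le; lia).
    destruct (Hsub k Hk) as [H | [-> H]].
    + eapply Rle_trans; [|apply (HJ2 k H)]. apply pow2_le.
      assert (0 <= IZR k) by (apply IZR_le; destruct H; lia). nra.
    + eapply Rle_trans; [|exact H]. eapply Rle_trans; [|exact HKd]. apply pow2_le. nra.
Qed.

End AddSingle.

Lemma sums_to_add_single a b k0 cs gs f g K : (k0 <= K)%Z ->
  (forall k, (k0 <= k)%Z -> cs k <> 0) -> sums_to a b k0 cs gs f ->
  sums_to a b k0 cs (add_single K (fun x => / cs K * g x) gs) (fun x => f x + g x).
Proof.
  intros HK Hcs Hsum x Hx. set (j := Z.to_nat (K - k0)).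
  apply (is_lim_seq_ext_loc (fun m => partial_sum k0 cs gs m x + g x)).
  - exists j. intros m Hm. unfold partial_sum, add_single. rewrite !sum_n_Reals.
    transitivity (sum_f_R0 (fun n => cs (k0 + Z.of_nat n)%Z * gs (k0 + Z.of_nat n)%Z x) m +
                  sum_f_R0 (fun n => if Nat.eq_dec n j then g x else 0) m).
    + rewrite sum_f_R0_single. destruct (le_dec j m); [reflexivity | lia].
    + rewrite <- sum_plus. apply sum_eq. intros n _.
      destruct (Z.eq_dec (k0 + Z.of_nat n) K), (Nat.eq_dec n j); unfold j in *; try lia.
      * subst K. field. apply Hcs. lia.
      * ring.
  - apply is_lim_seq_plus'; [apply Hsum, Hx | apply is_lim_seq_const].
Qed.

Lemma pliable_mult_add a b c k0 cs gs f h g : a < b -> c = a \/ c = b -> smooth a b f ->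
  pliable_series a b c k0 cs gs -> sums_to a b k0 cs gs f ->
  smooth a b h -> smooth a b g -> ~ supp a b g c ->
  pliable a b c (fun x => h x * f x + g x).
Proof.
  intros Hab Hc Hf HP Hsum Hh Hg Hgc.
  split; [exact Hc|]. split; [apply smooth_plus; auto; apply smooth_mult; auto|].
  destruct (pliable_series_large_start a b c k0 cs gs f 0 HP Hsum)
    as (k1 & cs' & gs' & Hk1 & HP' & Hsum').
  destruct (not_supp_vanishes_near a b g c Hgc (endpoint_Icc a b c Hab Hc)) as (d & Hd & Hgz).
  destruct (exists_pow2_opp_le k1 (d / 2) ltac:(lra)) as (K & HK & _ & HKd).
  exists k1, cs', (add_single K (fun x => / cs' K * g x) (fun k x => h x * gs' k x)). split.
  - apply (pliable_series_add_single a b c k1 cs' _ g K d); auto. apply pliable_series_mult; auto.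
  - apply sums_to_add_single; auto.
    + intros k Hk. destruct HP' as [Hpos _]. apply Rgt_not_eq, Hpos, Hk.
    + apply sums_to_mult, Hsum'.
Qed.

(** * Change of variables: parts (d) and (e) *)

Section Diffeomorphism.
Variables (a b a' b' : R) (d e : R -> R).
Hypothesis Hab : a < b.
Hypothesis Hab' : a' < b'.
Hypothesis Hd : smooth a' b' d.
Hypothesis He : smooth a b e.
Hypothesis Hde : forall x, Icc a' b' x -> Icc a b (d x) /\ e (d x) = x.
Hypothesis Hed : forall y, Icc a b y -> Icc a' b' (e y) /\ d (e y) = y.

Lemma diffeo_inj x y : Icc a' b' x -> Icc a' b' y -> d x = d y -> x = y.
Proof. intros Hx Hy E. rewrite <- (proj2 (Hde x Hx)), <- (proj2 (Hde y Hy)), E. reflexivity. Qed.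

Lemma is_derive_within_diffeo F x l : Icc a' b' x -> is_derive_within a b F (d x) l ->
  is_derive_within a' b' (fun y => F (d y)) x (l * Dw a' b' d x).
Proof.
  intros Hx HF. apply (is_derive_within_comp a b a' b' F d x); auto.
  - intros y Hy; apply Hde; auto.
  - intros y Hy E. apply diffeo_inj; auto.
  - apply Dw_correct; auto. apply smooth_derivable_on; auto.
Qed.

Lemma Dw_diffeo F x : Icc a' b' x -> derivable_on a b F ->
  Dw a' b' (fun y => F (d y)) x = Dw a b F (d x) * Dw a' b' d x.
Proof.
  intros Hx HF. apply is_derive_within_unique; auto.
  apply is_derive_within_diffeo; auto. apply Dw_correct; auto. apply Hde; auto.
Qed.

Lemma derivable_upto_diffeo n F : derivable_upto n a b F -> derivable_upto n a' b' (fun y => F (d y)).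
Proof.
  revert F. induction n; intros F HF.
  - apply derivable_upto_0. apply derivable_upto_0 in HF. intros x Hx. eexists.
    apply is_derive_within_diffeo; auto. apply Dw_correct; auto. apply Hde; auto.
  - apply derivable_upto_S in HF as [HF0 HF]. apply derivable_upto_S. split.
    + intros x Hx. eexists. apply is_derive_within_diffeo; auto. apply Dw_correct; auto. apply Hde; auto.
    + apply (derivable_upto_ext a' b' (fun y => Dw a b F (d y) * Dw a' b' d y)).
      * intros z Hz. symmetry. apply Dw_diffeo; auto.
      * apply derivable_upto_mult; auto. apply smooth_derivable_upto, smooth_Dw; auto.
Qed.

Lemma smooth_diffeo F : smooth a b F -> smooth a' b' (fun y => F (d y)).
Proof.
  rewrite !smooth_derivable_upto. intros HF n. apply derivable_upto_diffeo, HF.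
Qed.

Lemma Cnorm_diffeo r : exists C, 0 <= C /\ forall g, smooth a b g ->
  Cnorm a' b' r (fun y => g (d y)) <= C * Cnorm a b r g.
Proof.
  assert (Hs0 : forall g, smooth a b g -> sup_norm a' b' (fun y => g (d y)) <= sup_norm a b g).
  { intros g Hg. apply sup_norm_le; [lra|]. intros x Hx.
    apply sup_norm_ge; [apply smooth_bounded; auto | apply Hde; auto]. }
  induction r as [|r (C & HC & HCb)].
  - exists 1. split; [lra|]. intros g Hg. rewrite !Cnorm_0, Rmult_1_l. apply Hs0; auto.
  - destruct (Cnorm_mult_bound a' b' Hab' r (Dw a' b' d) (smooth_Dw _ _ _ Hd)) as (K1 & HK1 & HK1b).
    exists (1 + K1 * C). split; [nra|]. intros g Hg.
    rewrite Cnorm_S, (Cnorm_ext a' b' r _ (fun y => Dw a' b' d y * Dw a b g (d y))); auto.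
    2:{ intros x Hx. rewrite Dw_diffeo; auto using smooth_derivable_on. ring. }
    pose proof (HK1b (fun y => Dw a b g (d y)) (smooth_diffeo _ (smooth_Dw _ _ _ Hg))).
    pose proof (HCb (Dw a b g) (smooth_Dw _ _ _ Hg)).
    pose proof (Cnorm_Dw a b Hab r g). pose proof (Hs0 g Hg).
    pose proof (sup_norm_le_Cnorm a b Hab (S r) g).
    pose proof (Cnorm_nonneg a b Hab (S r) g). pose proof (Cnorm_nonneg a b Hab r (Dw a b g)).
    assert (K1 * (C * Cnorm a b r (Dw a b g)) <= K1 * (C * Cnorm a b (S r) g)).
    { apply Rmult_le_compat_l; auto. apply Rmult_le_compat_l; auto. }
    nra.
Qed.

Lemma supp_diffeo g x : Icc a' b' x -> (supp a' b' (fun y => g (d y)) x <-> supp a b g (d x)).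
Proof.
  intros Hx. split.
  - intros [_ Hs]. split; [apply Hde; auto|]. intros eps Heps.
    destruct (derivable_on_continuous a' b' d (smooth_derivable_on _ _ _ Hd) x Hx eps Heps)
      as (del & Hdel & Hc).
    destruct (Hs del Hdel) as (y & Hy & Hyd & Hg). exists (d y). split; [apply Hde; auto|]. auto.
  - intros [Hdx Hs]. split; auto. intros eps Heps.
    destruct (derivable_on_continuous a b e (smooth_derivable_on _ _ _ He) (d x) Hdx eps Heps)
      as (del & Hdel & Hc).
    destruct (Hs del Hdel) as (z & Hz & Hzd & Hg). destruct (Hed z Hz) as [Hez Hdez].
    exists (e z). split; auto. split; [|rewrite Hdez; auto].
    rewrite <- (proj2 (Hde x Hx)). apply Hc; auto.
Qed.

Lemma Dw_diffeo_neq_0 x : Icc a' b' x -> Dw a' b' d x <> 0.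
Proof.
  intros Hx E.
  assert (H1 : is_derive_within a' b' (fun y => e (d y)) x (Dw a b e (d x) * Dw a' b' d x)).
  { apply is_derive_within_diffeo; auto.
    apply Dw_correct; auto using smooth_derivable_on. apply Hde, Hx. }
  assert (H2 : is_derive_within a' b' (fun y => e (d y)) x 1).
  { apply (is_derive_within_ext a' b' (fun y => y)); [exact Hx | | apply is_derive_within_id].
    intros y Hy. symmetry. apply Hde, Hy. }
  pose proof (is_derive_within_eq _ _ _ _ _ _ Hab' Hx H1 H2). rewrite E in H. lra.
Qed.

(* An interior preimage of an endpoint would be an interior extremum of [d], where [Dw d] vanishes. *)
Lemma diffeo_endpoint y : y = a \/ y = b -> e y = a' \/ e y = b'.
Proof.
  intros Hy. destruct (Hed y (endpoint_Icc a b y Hab Hy)) as [Hey Hdey].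
  destruct (Req_dec (e y) a') as [|Ha]; auto. destruct (Req_dec (e y) b') as [|Hb]; auto. exfalso.
  assert (Hin : a' < e y < b') by (unfold Icc in Hey; lra).
  apply (Dw_diffeo_neq_0 (e y) Hey).
  assert (HDd : is_derive_within a' b' d (e y) (Dw a' b' d (e y)))
    by (apply Dw_correct; auto using smooth_derivable_on).
  destruct Hy as [Hy|Hy].
  - apply (is_derive_within_interior_min a' b' d (e y)); auto.
    intros x Hx. rewrite Hdey, Hy. apply Hde, Hx.
  - assert (HH : -1 * Dw a' b' d (e y) = 0).
    { apply (is_derive_within_interior_min a' b' (fun x => -1 * d x) (e y)); auto.
      - apply is_derive_within_scal, HDd.
      - intros x Hx. rewrite Hdey, Hy. pose proof (proj1 (Hde x Hx)). unfold Icc in H. lra. }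
    lra.
Qed.

End Diffeomorphism.

Lemma dyadic_scale m : forall T rho, 0 < T -> rho <= T -> T * (/ 2) ^ (S m) <= rho ->
  exists i, (i <= m)%nat /\ T * (/ 2) ^ (S i) <= rho <= 2 * (T * (/ 2) ^ (S i)).
Proof.
  induction m as [|m IH]; intros T rho HT H1 H2.
  - exists 0%nat. simpl in *. split; [lia | lra].
  - destruct (Rle_dec (T * / 2) rho).
    + exists 0%nat. simpl. split; [lia | lra].
    + destruct (IH (T * / 2) rho) as (i & Hi & Hrho); [lra | lra | |].
      * replace (T * / 2 * (/ 2) ^ S m) with (T * (/ 2) ^ S (S m)) by (simpl; ring). exact H2.
      * exists (S i). split; [lia|].
        replace (T * (/ 2) ^ S (S i)) with (T * / 2 * (/ 2) ^ S i) by (simpl; ring). exact Hrho.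
Qed.

Lemma dyadic_scale_bounds T i : 0 < T -> 0 < T * (/ 2) ^ S i /\ 2 * (T * (/ 2) ^ S i) <= T.
Proof.
  intros HT. pose proof (half_pow_pos i). pose proof (half_pow_le_1 i). simpl.
  split; [apply Rmult_lt_0_compat; [|apply Rmult_lt_0_compat]; lra|].
  assert (T * (/ 2) ^ i <= T * 1) by (apply Rmult_le_compat_l; lra). lra.
Qed.

Lemma dist_endpoints_sum lo hi p q y : (p = lo /\ q = hi) \/ (p = hi /\ q = lo) -> Icc lo hi y ->
  Rabs (y - p) + Rabs (y - q) = hi - lo.
Proof. intros [[-> ->]|[-> ->]] Hy; unfold Icc in Hy; unfold Rabs; repeat destruct Rcase_abs; lra. Qed.

Section DiffeoSeries.
Variables (a b a' b' : R) (d e : R -> R) (c : R) (Cd Ce : R) (m : nat).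
Hypothesis Hab : a < b.
Hypothesis Hab' : a' < b'.
Hypothesis Hd : smooth a' b' d.
Hypothesis He : smooth a b e.
Hypothesis Hde : forall x, Icc a' b' x -> Icc a b (d x) /\ e (d x) = x.
Hypothesis Hed : forall y, Icc a b y -> Icc a' b' (e y) /\ d (e y) = y.
Hypothesis Hc : c = a \/ c = b.
Hypothesis HCd : 1 <= Cd.
Hypothesis Hlipd : forall x y, Icc a' b' x -> Icc a' b' y -> Rabs (d x - d y) <= Cd * Rabs (x - y).
Hypothesis HCe : 1 <= Ce.
Hypothesis Hlipe : forall x y, Icc a b x -> Icc a b y -> Rabs (e x - e y) <= Ce * Rabs (x - y).
Hypothesis Hm : (/ 2) ^ (S m) * (2 * Cd * Ce) <= 1.

Let cf := if Req_EM_T c a then b else a.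

Lemma opposite_endpoint : (c = a /\ cf = b) \/ (c = b /\ cf = a).
Proof. unfold cf. destruct (Req_EM_T c a); [left | right]; split; auto. destruct Hc; congruence. Qed.

Lemma diffeo_opposite_endpoints : (e c = a' /\ e cf = b') \/ (e c = b' /\ e cf = a').
Proof.
  pose proof opposite_endpoint as Hcf.
  assert (E1 := diffeo_endpoint a b a' b' d e Hab Hab' Hd He Hde Hed c Hc).
  assert (E2 := diffeo_endpoint a b a' b' d e Hab Hab' Hd He Hde Hed cf
                  ltac:(destruct Hcf as [[_ ->]|[_ ->]]; auto)).
  assert (Hne : e c <> e cf).
  { intros E. assert (c = cf); [|destruct Hcf as [[-> ->]|[-> ->]]; lra].
    rewrite <- (proj2 (Hed c (endpoint_Icc a b c Hab Hc))), E.
    apply Hed. destruct Hcf as [[_ ->]|[_ ->]]; unfold Icc; lra. }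
  destruct E1 as [E1|E1], E2 as [E2|E2]; rewrite E1, E2 in *; auto; contradiction.
Qed.

(* Measured from the opposite endpoint, [x] is at distance [>= b' - a' - 2 eps]; pulling this back
   through the Lipschitz map [e] keeps [d x] away from the opposite endpoint of [J]. *)
Lemma diffeo_dist_endpoint_le x eps : Icc a' b' x -> Rabs (x - e c) <= 2 * eps ->
  Rabs (d x - c) <= b - a - (b' - a' - 2 * eps) / Ce.
Proof.
  intros Hx Hxe. destruct (Hde x Hx) as [Hdx Hedx].
  pose proof (dist_endpoints_sum a' b' (e c) (e cf) x diffeo_opposite_endpoints Hx) as S1.
  pose proof (dist_endpoints_sum a b c cf (d x) opposite_endpoint Hdx) as S2.
  assert (Rabs (x - e cf) <= Ce * Rabs (d x - cf)).
  { rewrite <- Hedx at 1. apply Hlipe; auto.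
    destruct opposite_endpoint as [[_ ->]|[_ ->]]; unfold Icc; lra. }
  assert ((b' - a' - 2 * eps) / Ce <= Rabs (d x - cf)).
  { apply (Rmult_le_reg_l Ce); [lra|]. unfold Rdiv.
    replace (Ce * ((b' - a' - 2 * eps) * / Ce)) with (b' - a' - 2 * eps) by (field; lra). lra. }
  lra.
Qed.

Lemma diffeo_length_le : b' - a' <= Ce * (b - a).
Proof.
  assert (Hcf : Icc a b cf) by (destruct opposite_endpoint as [[_ ->]|[_ ->]]; unfold Icc; lra).
  replace (b' - a') with (Rabs (e cf - e c))
    by (destruct diffeo_opposite_endpoints as [[-> ->]|[-> ->]]; unfold Rabs; destruct Rcase_abs; lra).
  replace (b - a) with (Rabs (cf - c))
    by (destruct opposite_endpoint as [[-> ->]|[-> ->]]; unfold Rabs; destruct Rcase_abs; lra).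
  apply Hlipe; auto. apply endpoint_Icc; auto.
Qed.

(* [d] distorts distances to the endpoint by at most the factors [Cd] and [Ce], so every index of
   the annulus [eps <= |x - e c| <= 2 eps] is an index of one of [m + 1] dyadic annuli around [c]. *)
Lemma Jeps_diffeo_localize eps : 0 < 2 * eps < b' - a' ->
  exists T, 0 < T /\ T <= 2 * Cd * eps /\ T < b - a /\
  forall k0 gs k, Jeps a' b' (e c) k0 (fun k y => gs k (d y)) eps k ->
    exists i, (i <= m)%nat /\ Jeps a b c k0 gs (T * (/ 2) ^ (S i)) k.
Proof.
  intros Heps. set (eta := (b' - a' - 2 * eps) / Ce).
  assert (Heta : 0 < eta < b - a).
  { pose proof diffeo_length_le. unfold eta. split; [apply Rdiv_lt_0_compat; lra|].
    apply (Rmult_lt_reg_l Ce); [lra|]. unfold Rdiv.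
    replace (Ce * ((b' - a' - 2 * eps) * / Ce)) with (b' - a' - 2 * eps) by (field; lra). lra. }
  set (T := Rmin (2 * Cd * eps) (b - a - eta)). exists T.
  assert (HT1 : T <= 2 * Cd * eps) by apply Rmin_l.
  assert (HT2 : T <= b - a - eta) by apply Rmin_r.
  assert (HT : 0 < T) by (apply Rmin_pos; nra).
  split; [exact HT|]. split; [exact HT1|]. split; [lra|].
  intros k0 gs k [Hk (x & Hx & Hxd)].
  assert (Hxi : Icc a' b' x) by (destruct Hx; auto).
  destruct (Hde x Hxi) as [Hdx Hedx].
  destruct (Hed c (endpoint_Icc a b c Hab Hc)) as [Hec Hdec].
  apply (supp_diffeo a b a' b' d e Hd He Hde Hed _ x Hxi) in Hx.
  set (rho := Rabs (d x - c)).
  assert (R1 : rho <= 2 * Cd * eps).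
  { unfold rho. rewrite <- Hdec at 1. eapply Rle_trans; [apply Hlipd; auto|]. nra. }
  assert (R2 : eps <= Ce * rho).
  { unfold rho. eapply Rle_trans; [apply Hxd|]. rewrite <- Hedx at 1. apply Hlipe; auto.
    apply endpoint_Icc; auto. }
  assert (R3 : rho <= b - a - eta) by (apply diffeo_dist_endpoint_le; auto; lra).
  assert (Hlow : T * (/ 2) ^ (S m) <= rho).
  { pose proof (half_pow_pos (S m)).
    assert (T * (/ 2) ^ (S m) <= eps * ((/ 2) ^ (S m) * (2 * Cd))) by nra.
    assert (eps * ((/ 2) ^ (S m) * (2 * Cd)) * Ce <= eps) by nra.
    assert (0 < eps) by lra. nra. }
  destruct (dyadic_scale m T rho HT ltac:(unfold T; apply Rmin_glb; lra) Hlow) as (i & Hi & Hrho).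
  exists i. split; auto. split; auto. exists (d x). split; auto.
Qed.

Variables (k0 : Z) (cs : Z -> R) (gs : Z -> R -> R).
Hypothesis HP : pliable_series a b c k0 cs gs.
Hypothesis Hk0 : (0 <= k0)%Z.
Hypothesis Hk0Cd : pow2 (- IZR k0) * (2 * Cd) <= 1.

Lemma Jeps_diffeo_scale (L eps : R) (k : Z) : 0 < L -> 0 < 2 * eps < b' - a' ->
  (forall eps, 0 < 2 * eps < b - a -> forall k, Jeps a b c k0 gs eps k -> pow2 (- IZR k * L) <= eps) ->
  Jeps a' b' (e c) k0 (fun k y => gs k (d y)) eps k -> pow2 (- IZR k * (INR (S m) * L + 1)) <= eps.
Proof.
  intros HL Heps HJ2 Hk.
  destruct (Jeps_diffeo_localize eps Heps) as (T & HT & HT1 & HT2 & Hloc).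
  destruct (Hloc k0 gs k Hk) as (i & Hi & HJi).
  pose proof (dyadic_scale_bounds T i HT) as Hscale.
  assert (HkL : pow2 (- IZR k * L) <= 2 * Cd * eps).
  { eapply Rle_trans; [apply (HJ2 (T * (/ 2) ^ S i) ltac:(lra) k HJi) | lra]. }
  assert (Hk0k : pow2 (- IZR k * (INR m * L + 1)) <= pow2 (- IZR k0)).
  { apply pow2_le. destruct Hk as [Hk _]. apply IZR_le in Hk.
    assert (0 <= IZR k0) by (apply IZR_le; lia).
    pose proof (pos_INR m). assert (0 <= INR m * L) by nra. nra. }
  replace (- IZR k * (INR (S m) * L + 1)) with (- IZR k * L + - IZR k * (INR m * L + 1))
    by (rewrite S_INR; ring).
  rewrite pow2_plus. pose proof (pow2_positive (- IZR k * L)). pose proof (pow2_positive (- IZR k0)).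
  assert (pow2 (- IZR k * L) * pow2 (- IZR k * (INR m * L + 1)) <= 2 * Cd * eps * pow2 (- IZR k0))
    by (apply Rmult_le_compat; auto; apply Rlt_le, pow2_positive).
  nra.
Qed.

Lemma pliable_series_diffeo : pliable_series a' b' (e c) k0 cs (fun k y => gs k (d y)).
Proof.
  destruct HP as (Hpos & Hsup & Hsm & Hlf & Hexp & L & HL & HJ).
  destruct (Hed c (endpoint_Icc a b c Hab Hc)) as [Hec Hdec].
  split; [exact Hpos|]. split; [exact Hsup|]. split.
  { intros k Hk. split; [apply (smooth_diffeo a b a' b' d e); auto; apply Hsm, Hk|].
    rewrite (supp_diffeo a b a' b' d e Hd He Hde Hed _ _ Hec), Hdec. apply Hsm, Hk. }
  split.
  { intros x Hx Hxc. destruct (Hde x Hx) as [Hdx Hedx].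
    destruct (Hlf (d x) Hdx) as (del & Hdel & N & HN); [intros E; apply Hxc; rewrite <- Hedx, E; auto|].
    destruct (derivable_on_continuous a' b' d (smooth_derivable_on _ _ _ Hd) x Hx del Hdel)
      as (del' & Hdel' & Hcont).
    exists del'. split; auto. exists N. intros k Hk HNk y Hy.
    assert (Hyi : Icc a' b' y) by (destruct Hy; auto).
    apply (supp_diffeo a b a' b' d e Hd He Hde Hed _ y Hyi) in Hy.
    specialize (HN k Hk HNk (d y) Hy). apply Rnot_lt_le. intros Hlt.
    specialize (Hcont y Hyi Hlt). lra. }
  split.
  { intros r. destruct (Cnorm_diffeo a b a' b' d e Hab Hab' Hd Hde r) as (C & HC & HCb).
    apply (at_most_exp_le _ (fun k => C * Cnorm a b r (gs k))); [|apply at_most_exp_scal, Hexp].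
    intros k Hk. split; [apply Cnorm_nonneg; auto | apply HCb, Hsm, Hk]. }
  exists (INR (S m) * L + 1). split; [pose proof (pos_INR (S m)); nra|].
  intros eps Heps. split.
  - destruct (Jeps_diffeo_localize eps Heps) as (T & HT & HT1 & HT2 & Hloc).
    intros l Hl Hin. eapply Rle_trans; [|apply (Rplus_le_compat_l _ 0 1); lra]. rewrite Rplus_0_r.
    apply (at_most_card_union L (fun i => Jeps a b c k0 gs (T * (/ 2) ^ S i)) m); auto.
    intros i Hi. pose proof (dyadic_scale_bounds T i HT).
    assert (Hadm : 0 < 2 * (T * (/ 2) ^ S i) < b - a) by lra.
    exact (proj1 (HJ _ Hadm)).
  - intros k Hk. apply (Jeps_diffeo_scale L); auto. intros eps' Heps' k'. apply (proj2 (HJ eps' Heps')).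
Qed.

End DiffeoSeries.

Lemma pliable_diffeo a b a' b' d e c k0 cs gs f : a < b -> a' < b' -> c = a \/ c = b ->
  smooth a' b' d -> smooth a b e ->
  (forall x, Icc a' b' x -> Icc a b (d x) /\ e (d x) = x) ->
  (forall y, Icc a b y -> Icc a' b' (e y) /\ d (e y) = y) ->
  smooth a b f -> pliable_series a b c k0 cs gs -> sums_to a b k0 cs gs f ->
  pliable a' b' (e c) (fun x => f (d x)).
Proof.
  intros Hab Hab' Hc Hd He Hde Hed Hf HP Hsum.
  destruct (bounded_derivative_Lipschitz a' b' d Hab' Hd) as (Cd & HCd & Hlipd).
  destruct (bounded_derivative_Lipschitz a b e Hab He) as (Ce & HCe & Hlipe).
  destruct (exists_half_pow_mult_le_1 (2 * Cd * Ce) ltac:(nra)) as [m Hm].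
  destruct (exists_pow2_opp_le 0 (/ (2 * Cd)) ltac:(apply Rinv_0_lt_compat; lra)) as (K & _ & HK0 & HK).
  destruct (pliable_series_large_start a b c k0 cs gs f K HP Hsum)
    as (k1 & cs' & gs' & Hk1 & HP' & Hsum').
  split; [apply (diffeo_endpoint a b a' b' d e); auto|].
  split; [apply (smooth_diffeo a b a' b' d e); auto|].
  exists k1, cs', (fun k y => gs' k (d y)). split.
  - apply (pliable_series_diffeo a b a' b' d e c Cd Ce m); auto; [lia|].
    assert (Hk1Cd : pow2 (- IZR k1) <= / (2 * Cd)).
    { eapply Rle_trans; [|exact HK]. apply pow2_le. apply IZR_le in Hk1. lra. }
    apply (Rmult_le_compat_r (2 * Cd)) in Hk1Cd; [|lra]. rewrite Rinv_l in Hk1Cd by lra. exact Hk1Cd.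
  - intros x Hx. apply Hsum', Hde, Hx.
Qed.

Lemma isometry_affine (iota : R -> R) : (forall x y, Rabs (iota x - iota y) = Rabs (x - y)) ->
  exists u t, u * u = 1 /\ forall x, iota x = u * x + t.
Proof.
  intros H. set (t := iota 0). set (u := iota 1 - t).
  assert (Hsq : forall p q, Rabs p = Rabs q -> p * p = q * q).
  { intros p q E. change (Rsqr p = Rsqr q). rewrite (Rsqr_abs p), (Rsqr_abs q), E. reflexivity. }
  assert (Hu : u * u = 1) by (unfold u, t; rewrite (Hsq _ _ (H 1 0)); ring).
  exists u, t. split; [exact Hu|]. intros x.
  pose proof (Hsq _ _ (H x 0)) as H0. pose proof (Hsq _ _ (H x 1)) as H1.
  fold t in H0. replace (iota 1) with (u + t) in H1 by (unfold u; ring).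
  assert (Hux : u * (iota x - t) = x) by nra.
  transitivity (u * u * (iota x - t) + t); [rewrite Hu; ring | rewrite Rmult_assoc, Hux; reflexivity].
Qed.

Lemma pliable_isometry a b a' b' c c' iota k0 cs gs f : a < b -> a' < b' -> c = a \/ c = b ->
  (forall x y, Rabs (iota x - iota y) = Rabs (x - y)) ->
  (forall x, Icc a' b' x <-> Icc a b (iota x)) -> iota c' = c ->
  smooth a b f -> pliable_series a b c k0 cs gs -> sums_to a b k0 cs gs f ->
  pliable a' b' c' (fun x => f (iota x)).
Proof.
  intros Hab Hab' Hc Hiso HI Hc' Hf HP Hsum.
  destruct (isometry_affine iota Hiso) as (u & t & Hu & Hiota).
  set (e := fun y => u * (y - t)).
  assert (Hei : forall y, iota (e y) = y).
  { intros y. rewrite Hiota. unfold e. rewrite <- Rmult_assoc, Hu. ring. }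
  assert (Hie : forall x, e (iota x) = x).
  { intros x. rewrite Hiota. unfold e. replace (u * x + t - t) with (u * x) by ring.
    rewrite <- Rmult_assoc, Hu. ring. }
  replace c' with (e c) by (rewrite <- Hc'; apply Hie).
  apply (pliable_diffeo a b a' b' iota e c k0 cs gs f); auto.
  - apply (smooth_ext a' b' (fun x => u * x + t)); [intros; symmetry; apply Hiota |].
    apply smooth_affine; auto.
  - apply (smooth_ext a b (fun y => u * y + - u * t)); [intros; unfold e; ring |].
    apply smooth_affine; auto.
  - intros x Hx. split; [apply HI, Hx | apply Hie].
  - intros y Hy. split; [apply HI; rewrite Hei; exact Hy | apply Hei].
Qed.

Theorem lemma4p1 (a b c : R) (k0 : Z) (cs : Z -> R) (gs : Z -> R -> R) (f : R -> R) :
  a < b -> (c = a \/ c = b) ->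
  smooth a b f ->
  pliable_series a b c k0 cs gs ->
  sums_to a b k0 cs gs f ->
  (* (a) *)
  (forall r : nat,
     is_lim_seq (fun m => Cnorm a b r (fun x => partial_sum k0 cs gs m x - f x)) 0) /\
  (* (b) *)
  (forall r : nat,
     deriv_n a b f r c = 0 /\
     pliable_series a b c k0 cs (fun k => deriv_n a b (gs k) r) /\
     sums_to a b k0 cs (fun k => deriv_n a b (gs k) r) (deriv_n a b f r) /\
     pliable a b c (deriv_n a b f r)) /\
  (* (c) *)
  (forall h g : R -> R, smooth a b h -> smooth a b g -> ~ supp a b g c ->
     pliable a b c (fun x => h x * f x + g x)) /\
  (* (d) *)
  (forall iota : R -> R, (forall x y, Rabs (iota x - iota y) = Rabs (x - y)) ->
     forall a' b' c' : R, a' < b' ->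
       (forall x, Icc a' b' x <-> Icc a b (iota x)) -> iota c' = c ->
       pliable a' b' c' (fun x => f (iota x))) /\
  (* (e) *)
  (forall (a' b' : R) (d e : R -> R), a' < b' ->
     smooth a' b' d -> smooth a b e ->
     (forall x, Icc a' b' x -> Icc a b (d x) /\ e (d x) = x) ->
     (forall y, Icc a b y -> Icc a' b' (e y) /\ d (e y) = y) ->
     pliable a' b' (e c) (fun x => f (d x))).
Proof.
  intros Hab Hc Hf HP Hsum.
  split; [apply (partial_sums_Cnorm_cv a b c k0 cs gs f); auto|].
  split; [intros r; apply pliable_deriv_n; auto|].
  split; [intros h g Hh Hg Hgc; apply (pliable_mult_add a b c k0 cs gs); auto|].
  split.
  - intros iota Hiso a' b' c' Hab' HI Hc'.
    apply (pliable_isometry a b a' b' c c' iota k0 cs gs f); auto.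
  - intros a' b' d e Hab' Hd He Hde Hed.
    apply (pliable_diffeo a b a' b' d e c k0 cs gs f); auto.
Qed.
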